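(* Let $\gamma(t)=\Phi(e^{it})$ be an analytic Jordan curve and $k\in\{0,1,2,\dots\}\cup\{\infty\}$. Then the set of $f\in C^k(\gamma^* )$ that are nowhere real analytic on $\gamma^*$ (i.e. real analytic at no point $\gamma(t_0)$, $t_0\in\mathbb{R}$) is a dense $G_\delta$ subset of $C^k(\gamma^* )$.
   Context: An analytic Jordan curve is $\gamma(t)=\Phi(e^{it})$, $t\in\mathbb{R}$, with $\Phi$ injective holomorphic on an annulus $\{\rho<|z|<R\}$, $0<\rho<1<R$; $\gamma^*$ is its image. $C^k(\gamma^* )$ is the space of $u:\gamma^*\to\mathbb{C}$ such that $\theta\mapsto u(\gamma(\theta))$ is $k$ times continuously differentiable on $\mathbb{R}$, with seminorms $\sup_{\theta\in\mathbb{R}}|\frac{d^l}{d\theta^l}u(\gamma(\theta))|$, integers $0\le l\le k$. A function $f:\gamma^*\to\mathbb{C}$ is real analytic at $\gamma(t_0)$ if there is a power series $\sum_{n\ge0}a_n(t-t_0)^n$ with radius of convergence $\delta>0$ such that $f(\gamma(t))=\sum_{n\ge0}a_n(t-t_0)^n$ for all $t\in(t_0-\delta,t_0+\delta)$. *)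

From Stdlib Require Import Reals.
Open Scope R_scope.

Definition Cx := (R * R)%type.
Definition Cadd (z w : Cx) : Cx := (fst z + fst w, snd z + snd w).
Definition Csub (z w : Cx) : Cx := (fst z - fst w, snd z - snd w).
Definition Cmul (z w : Cx) : Cx :=
  (fst z * fst w - snd z * snd w, fst z * snd w + snd z * fst w).
Definition Cnorm (z : Cx) : R := sqrt (fst z * fst z + snd z * snd z).
Definition Cexpi (t : R) : Cx := (cos t, sin t).

Definition in_annulus (rho Rr : R) (z : Cx) : Prop := rho < Cnorm z < Rr.

Definition holomorphic_on_annulus (Phi : Cx -> Cx) (rho Rr : R) : Prop :=
  forall z, in_annulus rho Rr z ->
    exists w : Cx, forall eps, 0 < eps -> exists delta, 0 < delta /\
      forall h : Cx, h <> (0,0) -> Cnorm h < delta ->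
        Cnorm (Csub (Csub (Phi (Cadd z h)) (Phi z)) (Cmul w h)) <= eps * Cnorm h.

Definition injective_on_annulus (Phi : Cx -> Cx) (rho Rr : R) : Prop :=
  forall z1 z2, in_annulus rho Rr z1 -> in_annulus rho Rr z2 ->
    Phi z1 = Phi z2 -> z1 = z2.

Definition gamma (Phi : Cx -> Cx) (t : R) : Cx := Phi (Cexpi t).

Definition curve (Phi : Cx -> Cx) : Type := { z : Cx | exists t : R, z = gamma Phi t }.
Definition curve_pt (Phi : Cx -> Cx) (t : R) : curve Phi :=
  exist _ (gamma Phi t) (ex_intro _ t eq_refl).

Definition pullback (Phi : Cx -> Cx) (f : curve Phi -> Cx) (t : R) : Cx :=
  f (curve_pt Phi t).

Definition ck_order := option nat. (* Some k = k, None = infinity *)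
Definition le_order (j : nat) (k : ck_order) : Prop :=
  match k with Some n => (j <= n)%nat | None => True end.

Definition derivs_upto (k : ck_order) (u : R -> Cx) (D : nat -> R -> Cx) : Prop :=
  (forall t, D 0%nat t = u t) /\
  (forall j, le_order j k ->
     continuity (fun t => fst (D j t)) /\ continuity (fun t => snd (D j t))) /\
  (forall j, le_order (S j) k -> forall t,
     derivable_pt_lim (fun s => fst (D j s)) t (fst (D (S j) t)) /\
     derivable_pt_lim (fun s => snd (D j s)) t (snd (D (S j) t))).

Definition in_Ck (Phi : Cx -> Cx) (k : ck_order) (f : curve Phi -> Cx) : Prop :=
  exists D, derivs_upto k (pullback Phi f) D.

(** basic neighbourhood given by the seminorms of order j <= N (j <= k):
    sup_theta |d^j/dtheta^j (g - f)(gamma theta)| <= eps *)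
Definition Ck_close (Phi : Cx -> Cx) (k : ck_order) (N : nat) (eps : R)
    (f g : curve Phi -> Cx) : Prop :=
  exists Df Dg, derivs_upto k (pullback Phi f) Df /\
    derivs_upto k (pullback Phi g) Dg /\
    forall j, (j <= N)%nat -> le_order j k ->
      forall t, Cnorm (Csub (Dg j t) (Df j t)) <= eps.

Definition Ck_open (Phi : Cx -> Cx) (k : ck_order) (U : (curve Phi -> Cx) -> Prop) : Prop :=
  forall f, U f -> in_Ck Phi k f /\
    exists N eps, 0 < eps /\
      forall g, in_Ck Phi k g -> Ck_close Phi k N eps f g -> U g.

Definition Ck_Gdelta (Phi : Cx -> Cx) (k : ck_order) (S : (curve Phi -> Cx) -> Prop) : Prop :=
  exists U : nat -> (curve Phi -> Cx) -> Prop,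
    (forall n, Ck_open Phi k (U n)) /\ (forall f, S f <-> forall n, U n f).

Definition Ck_dense (Phi : Cx -> Cx) (k : ck_order) (S : (curve Phi -> Cx) -> Prop) : Prop :=
  forall f, in_Ck Phi k f -> forall N eps, 0 < eps ->
    exists g, S g /\ in_Ck Phi k g /\ Ck_close Phi k N eps f g.

Definition real_analytic_at (Phi : Cx -> Cx) (f : curve Phi -> Cx) (t0 : R) : Prop :=
  exists (a : nat -> Cx) (delta : R), 0 < delta /\
    forall t, t0 - delta < t < t0 + delta ->
      Pser (fun n => fst (a n)) (t - t0) (fst (pullback Phi f t)) /\
      Pser (fun n => snd (a n)) (t - t0) (snd (pullback Phi f t)).

Definition nowhere_real_analytic (Phi : Cx -> Cx) (f : curve Phi -> Cx) : Prop :=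
  forall t0 : R, ~ real_analytic_at Phi f t0.

From Coquelicot Require Import Coquelicot.
From Stdlib Require Import Reals Lra Lia ZArith Ranalysis5 Cantor.
From Stdlib Require Import ClassicalEpsilon FunctionalExtensionality.
Open Scope R_scope.

(** Density: for a very lacunary sequence [freq k], the function
    [h t = \sum_k freq k ^ (-k) e^(i freq k t)] is smooth and 2pi-periodic, while its
    (K+1)-st derivative has size about [freq K], which eventually beats every Cauchy
    estimate [p! m^p] of an analytic function. Hence [f + c1 h] and [f + c2 h], [c1 <> c2],
    cannot both be analytic with the same bounds at nearby points, so the [c] for which
    [f + c h] is analytic somewhere form a countable set, and arbitrarily small [c] avoid it.

    G_delta: the functions having, at some point, an expansion whose centre, coefficients
    and inverse radius are bounded by [m] form a set closed under uniform limits (by a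
    diagonal compactness argument on the coefficients), and the nowhere analytic functions
    are the intersection of the complements of these sets. *)

Lemma Cnorm_fst z : Rabs (fst z) <= Cnorm z.
Proof.
  unfold Cnorm. rewrite <- sqrt_Rsqr_abs. apply sqrt_le_1_alt. unfold Rsqr. nra.
Qed.

Lemma Cnorm_snd z : Rabs (snd z) <= Cnorm z.
Proof.
  unfold Cnorm. rewrite <- sqrt_Rsqr_abs. apply sqrt_le_1_alt. unfold Rsqr. nra.
Qed.

Lemma Cnorm_le_Rabs_sum z : Cnorm z <= Rabs (fst z) + Rabs (snd z).
Proof.
  destruct z as [x y]; unfold Cnorm; simpl.
  rewrite <- (sqrt_Rsqr (Rabs x + Rabs y)) by (pose proof (Rabs_pos x); pose proof (Rabs_pos y); lra).
  apply sqrt_le_1_alt. unfold Rsqr.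
  unfold Rabs; destruct (Rcase_abs x); destruct (Rcase_abs y); nra.
Qed.

Lemma Cnorm_triangle z w : Cnorm (Cadd z w) <= Cnorm z + Cnorm w.
Proof.
  destruct z as [x1 y1], w as [x2 y2]; unfold Cnorm, Cadd; simpl.
  set (A := x1 * x1 + y1 * y1). set (B := x2 * x2 + y2 * y2).
  assert (HA : 0 <= A) by (unfold A; nra). assert (HB : 0 <= B) by (unfold B; nra).
  pose proof (sqrt_pos A); pose proof (sqrt_pos B).
  rewrite <- (sqrt_Rsqr (sqrt A + sqrt B)) by lra.
  apply sqrt_le_1_alt. unfold Rsqr.
  assert (Cauchy_Schwarz : x1 * x2 + y1 * y2 <= sqrt A * sqrt B).
  { rewrite <- sqrt_mult by lra.
    destruct (Rle_dec (x1 * x2 + y1 * y2) 0); [pose proof (sqrt_pos (A * B)); lra|].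
    rewrite <- (sqrt_Rsqr (x1 * x2 + y1 * y2)) by lra. apply sqrt_le_1_alt.
    unfold Rsqr, A, B. pose proof (Rle_0_sqr (x1 * y2 - x2 * y1)). unfold Rsqr in *. nra. }
  pose proof (sqrt_sqrt A HA); pose proof (sqrt_sqrt B HB).
  unfold A, B in *. nra.
Qed.

Lemma Cnorm_sub_triangle a b c : Cnorm (Csub a b) <= Cnorm (Csub a c) + Cnorm (Csub c b).
Proof.
  replace (Csub a b) with (Cadd (Csub a c) (Csub c b)); [apply Cnorm_triangle|].
  destruct a, b, c; unfold Cadd, Csub; simpl; f_equal; ring.
Qed.

Lemma Cnorm_sub_diag z : Cnorm (Csub z z) = 0.
Proof.
  unfold Cnorm, Csub; simpl. rewrite !Rminus_diag.
  replace (0 * 0 + 0 * 0) with 0 by ring. apply sqrt_0.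
Qed.

Lemma Cnorm_Cexpi t : Cnorm (Cexpi t) = 1.
Proof.
  unfold Cnorm, Cexpi; simpl. rewrite <- sqrt_1. f_equal.
  pose proof (sin2_cos2 t). unfold Rsqr in *. lra.
Qed.

Definition half_geom_dominated (B : R) (a : nat -> R) : Prop :=
  forall k, Rabs (a k) <= B * (/ 2) ^ k.

Lemma ex_series_half_geom B : ex_series (fun k => B * (/ 2) ^ k).
Proof. apply (ex_series_scal_l B (fun k => (/ 2) ^ k)), ex_series_geom. rewrite Rabs_right; lra. Qed.

Lemma Series_half_geom B : Series (fun k => B * (/ 2) ^ k) = 2 * B.
Proof. rewrite Series_scal_l, Series_geom by (rewrite Rabs_right; lra). field. Qed.

Lemma half_geom_dominated_ex_series_Rabs B a :
  half_geom_dominated B a -> ex_series (fun k => Rabs (a k)).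
Proof.
  intros Ha. apply (ex_series_le (fun k => Rabs (a k)) (fun k => B * (/ 2) ^ k));
    [|apply ex_series_half_geom].
  intros k. rewrite Rabs_Rabsolu. apply Ha.
Qed.

Lemma half_geom_dominated_ex_series B a : half_geom_dominated B a -> ex_series a.
Proof. intros Ha. apply ex_series_Rabs, (half_geom_dominated_ex_series_Rabs B), Ha. Qed.

Lemma half_geom_dominated_Series_bound B a :
  half_geom_dominated B a -> Rabs (Series a) <= 2 * B.
Proof.
  intros Ha. eapply Rle_trans; [apply Series_Rabs, (half_geom_dominated_ex_series_Rabs B), Ha|].
  rewrite <- Series_half_geom. apply Series_le; [|apply ex_series_half_geom].
  intros k; split; [apply Rabs_pos | apply Ha].
Qed.

Lemma half_geom_dominated_tail B a n :
  half_geom_dominated B a -> Rabs (Series a - sum_f_R0 a n) <= 2 * B * (/ 2) ^ S n.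
Proof.
  intros Ha.
  rewrite (Series_incr_n _ (S n)) by (lia || apply (half_geom_dominated_ex_series B), Ha).
  simpl (Init.Nat.pred (S n)).
  replace (sum_f_R0 a n + Series (fun k => a (S n + k)%nat) - sum_f_R0 a n)
    with (Series (fun k => a (S n + k)%nat)) by ring.
  replace (2 * B * (/ 2) ^ S n) with (2 * (B * (/ 2) ^ S n)) by ring.
  apply half_geom_dominated_Series_bound. intros k.
  eapply Rle_trans; [apply Ha|]. rewrite pow_add. right; ring.
Qed.

Lemma Series_ge_term (a : nat -> R) K :
  (forall n, 0 <= a n) -> ex_series a -> a K <= Series a.
Proof.
  intros Hpos Hex.
  rewrite (Series_incr_n _ (S K)) by (lia || auto). simpl (Init.Nat.pred (S K)).
  assert (Htail : 0 <= Series (fun k => a (S K + k)%nat)).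
  { apply Rle_trans with (Series (fun k => 0 * (/ 2) ^ k)); [rewrite Series_half_geom; lra|].
    apply Series_le; [|apply (ex_series_incr_n a (S K)), Hex].
    intros; rewrite Rmult_0_l; split; [lra | auto]. }
  assert (a K <= sum_f_R0 a K).
  { destruct K; simpl; [lra|]. pose proof (cond_pos_sum a K Hpos). lra. }
  lra.
Qed.

Lemma fact_add_le (k p : nat) : (fact (k + p) <= 2 ^ (k + p) * fact k * fact p)%nat.
Proof.
  remember (k + p)%nat as n eqn:Hn. revert k p Hn.
  induction n as [|n IH]; intros k p Hn.
  - destruct k, p; simpl in *; lia.
  - assert (Hpow : forall i, (1 <= 2 ^ i)%nat) by (induction i; simpl; lia).
    destruct k as [|k]; [|destruct p as [|p]].
    + simpl in Hn; subst p. specialize (Hpow (S n)). simpl (fact 0).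
      revert Hpow. generalize (fact (S n)) (2 ^ S n)%nat. intros; nia.
    + assert (n = k) by lia; subst n. specialize (Hpow (S k)). simpl (fact 0).
      revert Hpow. generalize (fact (S k)) (2 ^ S k)%nat. intros; nia.
    + (* fact (S n) = (S k + S p) * fact n, split along the two predecessors *)
      assert (H1 := IH k (S p) ltac:(lia)). assert (H2 := IH (S k) p ltac:(lia)).
      change (fact (S n)) with (S n * fact n)%nat.
      change (fact (S k)) with (S k * fact k)%nat in *.
      change (fact (S p)) with (S p * fact p)%nat in *.
      change (2 ^ S n)%nat with (2 * 2 ^ n)%nat.
      replace (S n) with (S k + S p)%nat by lia.
      apply (Nat.mul_le_mono_l _ _ (S k)) in H1. apply (Nat.mul_le_mono_l _ _ (S p)) in H2.
      revert H1 H2. generalize (fact n) (2 ^ n)%nat (fact k) (fact p). intros; nia.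
Qed.

Lemma fact_ratio_le (k p : nat) :
  INR (fact (k + p)) / INR (fact k) <= INR (fact p) * 2 ^ (k + p).
Proof.
  pose proof (le_INR _ _ (fact_add_le k p)) as H.
  rewrite !mult_INR, pow_INR in H. replace (INR 2) with 2 in H by (simpl; lra).
  pose proof (lt_0_INR _ (lt_O_fact k)).
  apply Rmult_le_reg_r with (INR (fact k)); auto.
  unfold Rdiv. rewrite Rmult_assoc, Rinv_l, Rmult_1_r by lra. lra.
Qed.

Definition coef_bounded (m : R) (a : nat -> R) : Prop := forall n, Rabs (a n) <= m ^ S n.

Section CoefBounded.
Variables (m : R) (a : nat -> R).
Hypotheses (Hm : 1 <= m) (Ha : coef_bounded m a).

Lemma coef_bounded_term x n : Rabs (a n * x ^ n) <= m * (m * Rabs x) ^ n.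
Proof.
  rewrite Rabs_mult, <- RPow_abs, Rpow_mult_distr, <- Rmult_assoc.
  apply Rmult_le_compat_r; [apply pow_le, Rabs_pos | apply Ha].
Qed.

Lemma coef_bounded_ex_series_Rabs x :
  m * Rabs x < 1 -> ex_series (fun n => Rabs (a n * x ^ n)).
Proof.
  intros Hx. apply (ex_series_le (fun n => Rabs (a n * x ^ n)) (fun n => m * (m * Rabs x) ^ n)).
  - intros n. rewrite Rabs_Rabsolu. apply coef_bounded_term.
  - apply (ex_series_scal_l m (fun n => (m * Rabs x) ^ n)), ex_series_geom.
    pose proof (Rabs_pos x). rewrite Rabs_right; nra.
Qed.

Lemma coef_bounded_in_radius x : Rabs x < / m -> Rbar_lt (Rabs x) (CV_radius a).
Proof.
  intros Hx. set (r := (Rabs x + / m) / 2).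
  assert (Hm0 : 0 < / m) by (apply Rinv_0_lt_compat; lra).
  assert (Hr0 : 0 <= r) by (pose proof (Rabs_pos x); unfold r; lra).
  assert (Hr : CV_disk a r).
  { unfold CV_disk. apply ex_series_ext with (fun n => Rabs (a n * Rabs r ^ n)).
    { intros n. now rewrite (Rabs_right r) by lra. }
    apply coef_bounded_ex_series_Rabs. rewrite Rabs_Rabsolu, Rabs_right by lra. unfold r.
    apply Rmult_lt_reg_r with (/ m); auto.
    replace (m * ((Rabs x + / m) / 2) * / m) with ((Rabs x + / m) / 2) by (field; lra). lra. }
  destruct (Lub_Rbar_correct (CV_disk a)) as [Hub _]. specialize (Hub r Hr).
  unfold CV_radius. destruct (Lub_Rbar (CV_disk a)); simpl in *; auto; unfold r in Hub; lra.
Qed.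

Lemma coef_bounded_PSeries_tail x r P : 0 <= r -> m * r <= / 2 -> Rabs x <= r ->
  Rabs (PSeries a x - sum_f_R0 (fun n => a n * x ^ n) P) <= 2 * m * (m * r) ^ S P.
Proof.
  intros Hr Hmr Hx.
  assert (Hex : ex_series (fun n => Rabs (a n * x ^ n))) by (apply coef_bounded_ex_series_Rabs; nra).
  unfold PSeries. rewrite (Series_incr_n _ (S P)) by (lia || now apply ex_series_Rabs).
  simpl (Init.Nat.pred (S P)).
  match goal with |- Rabs (?s + ?T - ?s) <= _ => replace (s + T - s) with T by ring end.
  eapply Rle_trans; [apply Series_Rabs, (ex_series_incr_n (fun k => Rabs (a k * x ^ k)) (S P)), Hex|].
  eapply Rle_trans.
  { apply (Series_le _ (fun k => m * (m * r) ^ S P * (m * r) ^ k)).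
    - intros k. split; [apply Rabs_pos|].
      eapply Rle_trans; [apply coef_bounded_term|]. rewrite Rmult_assoc, <- pow_add.
      apply Rmult_le_compat_l; [lra|]. apply pow_incr.
      split; [apply Rmult_le_pos; [lra | apply Rabs_pos] | apply Rmult_le_compat_l; lra].
    - apply (ex_series_scal_l _ (fun k => (m * r) ^ k)), ex_series_geom. rewrite Rabs_right; nra. }
  rewrite Series_scal_l, Series_geom by (rewrite Rabs_right; nra).
  assert (0 <= m * (m * r) ^ S P) by (apply Rmult_le_pos; [lra | apply pow_le; nra]).
  assert (/ (1 - m * r) <= 2) by (replace 2 with (/ / 2) by field; apply Rinv_le_contravar; lra).
  nra.
Qed.

Lemma coef_bounded_PSeries_derive_n_bound p x : Rabs x <= / (4 * m) ->
  Rabs (PSeries (PS_derive_n p a) x) <= 2 * INR (fact p) * 2 ^ p * m ^ S p.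
Proof.
  intros Hx. assert (Hm0 : 0 < m) by lra.
  set (C := INR (fact p) * 2 ^ p * m ^ S p).
  assert (Hterm : forall k, Rabs (PS_derive_n p a k * x ^ k) <= C * (/ 2) ^ k).
  { intros k. unfold PS_derive_n. rewrite !Rabs_mult.
    assert (Hq : 0 <= INR (fact (k + p)) / INR (fact k)).
    { apply Rmult_le_pos; [apply pos_INR | left; apply Rinv_0_lt_compat, lt_0_INR, lt_O_fact]. }
    rewrite (Rabs_right _ (Rle_ge _ _ Hq)).
    assert (X : Rabs (x ^ k) <= (/ (4 * m)) ^ k).
    { rewrite <- RPow_abs. apply pow_incr. split; [apply Rabs_pos | auto]. }
    eapply Rle_trans.
    { apply Rmult_le_compat; [apply Rmult_le_pos; [auto | apply Rabs_pos] | apply Rabs_pos | | exact X].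
      apply Rmult_le_compat; [auto | apply Rabs_pos | apply fact_ratio_le | apply Ha]. }
    (* the factor 2^k from the factorial ratio is absorbed by (4m)^(-k) *)
    unfold C. rewrite Rinv_mult, Rpow_mult_distr.
    replace (S (k + p)) with (k + S p)%nat by lia. rewrite !pow_add.
    replace (INR (fact p) * (2 ^ k * 2 ^ p) * (m ^ k * m ^ S p) * ((/ 4) ^ k * (/ m) ^ k))
      with (INR (fact p) * 2 ^ p * m ^ S p * ((2 * / 4) ^ k * (m * / m) ^ k))
      by (rewrite !Rpow_mult_distr; ring).
    rewrite Rinv_r, pow1 by lra. replace (2 * / 4) with (/ 2) by field. lra. }
  assert (HC : 0 <= C).
  { unfold C. apply Rmult_le_pos; [apply Rmult_le_pos; [apply pos_INR|]|]; apply pow_le; lra. }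
  unfold PSeries. eapply Rle_trans; [apply Series_Rabs, (half_geom_dominated_ex_series_Rabs C)|].
  { exact Hterm. }
  eapply Rle_trans;
    [apply Series_le; [intros k; split; [apply Rabs_pos | apply Hterm] | apply ex_series_half_geom]|].
  rewrite Series_half_geom. unfold C. lra.
Qed.

End CoefBounded.

Lemma Pser_terms_bounded (b : nat -> R) (x l : R) :
  Pser b x l -> exists M, forall n, Rabs (b n * x ^ n) <= M.
Proof.
  intros H. apply is_pseries_Reals in H.
  assert (Hex : ex_series (fun n => b n * x ^ n)).
  { exists l. eapply is_series_ext; [|exact H]. intros n. simpl.
    unfold scal; simpl; unfold mult; simpl. rewrite pow_n_pow. ring. }
  pose proof (cv_cvabs _ _ (proj1 (is_lim_seq_Reals _ _) (ex_series_lim_0 _ Hex))) as Hcv.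
  destruct (cauchy_bound _ (CV_Cauchy _ (exist _ _ Hcv))) as [M HM].
  exists M. intros n. apply HM. exists n. reflexivity.
Qed.

Lemma Pser_coef_bounded (b : nat -> R) (r l : R) :
  0 < r -> Pser b r l -> exists m0, forall m, m0 <= m -> coef_bounded m b.
Proof.
  intros Hr H. destruct (Pser_terms_bounded b r l H) as [M HM].
  assert (HM0 : 0 <= M) by (eapply Rle_trans; [apply Rabs_pos | apply (HM 0%nat)]).
  pose proof (Rinv_0_lt_compat r Hr).
  exists (M + / r). intros m Hm n.
  assert (Hrn : 0 < r ^ n) by (apply pow_lt; lra).
  assert (H1 : Rabs (b n) <= M * / r ^ n).
  { apply Rmult_le_reg_r with (r ^ n); auto.
    rewrite Rmult_assoc, Rinv_l, Rmult_1_r by lra.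
    rewrite <- (Rabs_right (r ^ n)) by lra. rewrite <- Rabs_mult. apply HM. }
  assert (H2 : / r ^ n <= m ^ n).
  { rewrite <- pow_inv. apply pow_incr. lra. }
  assert (0 <= / r ^ n) by (left; apply Rinv_0_lt_compat; lra).
  simpl. eapply Rle_trans; [exact H1|]. apply Rmult_le_compat; lra.
Qed.

Definition Cpseries (a : nat -> Cx) (t0 t : R) : Cx :=
  (PSeries (fun n => fst (a n)) (t - t0), PSeries (fun n => snd (a n)) (t - t0)).

Definition bounded_expansion (u : R -> Cx) (m : nat) (t0 : R) (a : nat -> Cx) : Prop :=
  1 <= INR m /\ Rabs t0 <= INR m /\
  coef_bounded (INR m) (fun n => fst (a n)) /\ coef_bounded (INR m) (fun n => snd (a n)) /\
  (forall t, Rabs (t - t0) < / INR m -> u t = Cpseries a t0 t).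

Lemma real_analytic_at_bounded_expansion Phi f t0 :
  real_analytic_at Phi f t0 -> exists m a, bounded_expansion (pullback Phi f) m t0 a.
Proof.
  intros [a [delta [Hd Hser]]].
  set (r := delta / 2). assert (Hr : 0 < r) by (unfold r; lra).
  destruct (Hser (t0 + r)) as [H1 H2]; [unfold r; lra|].
  replace (t0 + r - t0) with r in H1, H2 by ring.
  destruct (Pser_coef_bounded _ _ _ Hr H1) as [m1 Hm1].
  destruct (Pser_coef_bounded _ _ _ Hr H2) as [m2 Hm2].
  destruct (INR_unbounded (Rabs m1 + Rabs m2 + Rabs t0 + / r + 1)) as [m Hm].
  pose proof (Rinv_0_lt_compat r Hr). pose proof (Rabs_pos t0).
  pose proof (Rle_abs m1). pose proof (Rabs_pos m1). pose proof (Rle_abs m2). pose proof (Rabs_pos m2).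
  exists m, a. repeat split; [lra | lra | apply Hm1; lra | apply Hm2; lra |].
  intros t Ht.
  assert (/ INR m < r).
  { rewrite <- (Rinv_inv r). apply Rinv_lt_contravar; [apply Rmult_lt_0_compat|]; lra. }
  destruct (Hser t) as [P1 P2]; [apply Rabs_def2 in Ht; unfold r in *; lra|].
  apply is_pseries_Reals, is_pseries_unique in P1.
  apply is_pseries_Reals, is_pseries_unique in P2.
  unfold Cpseries. rewrite P1, P2. now destruct (pullback Phi f t).
Qed.

Lemma bounded_expansion_real_analytic_at Phi f t0 (a : nat -> Cx) (m delta : R) :
  1 <= m -> 0 < delta -> delta <= / (2 * m) ->
  coef_bounded m (fun n => fst (a n)) -> coef_bounded m (fun n => snd (a n)) ->
  (forall t, Rabs (t - t0) < delta -> pullback Phi f t = Cpseries a t0 t) ->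
  real_analytic_at Phi f t0.
Proof.
  intros Hm Hd Hdm Ha1 Ha2 Heq.
  exists a, delta. split; auto. intros t Ht.
  assert (Hx : Rabs (t - t0) < delta) by (apply Rabs_def1; lra).
  rewrite (Heq t Hx). unfold Cpseries; simpl.
  assert (Hmx : m * Rabs (t - t0) < 1).
  { assert (m * delta <= / 2).
    { apply Rle_trans with (m * / (2 * m)); [apply Rmult_le_compat_l; lra | right; field; lra]. }
    pose proof (Rabs_pos (t - t0)). nra. }
  split; apply is_pseries_Reals, PSeries_correct, CV_disk_correct;
    apply coef_bounded_ex_series_Rabs with m; auto.
Qed.

Definition trisect_avoiding (u : nat -> R) (p : R * R) (n : nat) : R * R :=
  let (a, b) := p in
  if Rlt_dec (a + (b - a) / 3) (u n) then (a, a + (b - a) / 3) else (b - (b - a) / 3, b).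

Fixpoint nested_avoiding (u : nat -> R) (a b : R) (n : nat) : R * R :=
  match n with
  | O => (a, b)
  | S n => trisect_avoiding u (nested_avoiding u a b n) n
  end.

Lemma trisect_avoiding_spec u p n : fst p < snd p ->
  let q := trisect_avoiding u p n in
  fst p <= fst q /\ fst q < snd q /\ snd q <= snd p /\ (u n < fst q \/ snd q < u n).
Proof.
  destruct p as [a b]; simpl; intros H. unfold trisect_avoiding.
  destruct (Rlt_dec _ _); simpl; lra.
Qed.

Lemma interval_avoids_sequence (u : nat -> R) (a b : R) :
  a < b -> exists x, a <= x <= b /\ forall n, x <> u n.
Proof.
  intros Hab.
  set (lo n := fst (nested_avoiding u a b n)). set (hi n := snd (nested_avoiding u a b n)).
  assert (Hlt : forall n, lo n < hi n).
  { induction n; [exact Hab | apply (trisect_avoiding_spec u _ n IHn)]. }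
  assert (P : forall n, lo n <= lo (S n) /\ lo (S n) < hi (S n) /\ hi (S n) <= hi n /\
                        (u n < lo (S n) \/ hi (S n) < u n)).
  { intros n. apply (trisect_avoiding_spec u _ n (Hlt n)). }
  assert (Hlo : forall n m, (n <= m)%nat -> lo n <= lo m).
  { intros n m Hnm; induction Hnm; [lra|]. pose proof (P m); lra. }
  assert (Hhi : forall n m, (n <= m)%nat -> hi m <= hi n).
  { intros n m Hnm; induction Hnm; [lra|]. pose proof (P m); lra. }
  assert (Hlohi : forall n m, lo n <= hi m).
  { intros n m. destruct (Compare_dec.le_lt_dec n m) as [H|H].
    - pose proof (Hlo n m H). pose proof (Hlt m). lra.
    - pose proof (Hhi m n (Nat.lt_le_incl _ _ H)). pose proof (Hlt n). lra. }
  set (E y := exists n, y = lo n).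
  destruct (completeness E) as [x [Hub Hlub]].
  { exists b. intros y [n ->]. apply (Hlohi n 0%nat). }
  { exists a, 0%nat. reflexivity. }
  assert (Hin : forall n, lo n <= x <= hi n).
  { intros n; split; [apply Hub; exists n; reflexivity|].
    apply Hlub. intros y [m ->]. apply Hlohi. }
  exists x. split.
  - exact (Hin 0%nat).
  - intros n Heq. pose proof (Hin (S n)). pose proof (P n). subst. lra.
Qed.

Definition infinitely_often (Q : nat -> Prop) : Prop := forall J, exists j, (J <= j)%nat /\ Q j.

Lemma cluster_value_along (Q : R -> nat -> Prop) (y : nat -> R) (b : R) :
  (forall e e' j, 0 < e -> e <= e' -> Q e j -> Q e' j) ->
  (forall e, 0 < e -> infinitely_often (Q e)) -> (forall j, Rabs (y j) <= b) ->
  exists c, forall e, 0 < e -> infinitely_often (fun j => Q e j /\ Rabs (y j - c) < e).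
Proof.
  intros Hmono HQ Hy.
  assert (Hyb : forall j, - b <= y j <= b) by (intros j; apply Rabs_le_between, Hy).
  (* c is the upper limit of y along the indices selected by Q *)
  set (E z := forall e, 0 < e -> infinitely_often (fun j => Q e j /\ z <= y j)).
  destruct (completeness E) as [c [Hub Hlub]].
  { exists b. intros z Hz. destruct (Hz 1 Rlt_0_1 0%nat) as [j [_ [_ Hj]]].
    pose proof (Hyb j). lra. }
  { exists (- b). intros e He J. destruct (HQ e He J) as [j [Hj1 Hj2]].
    exists j. pose proof (Hyb j). repeat split; auto; lra. }
  exists c. intros e He.
  assert (Hbelow : exists z, E z /\ c - e / 2 < z).
  { apply NNPP; intros Hn. assert (Hc : is_upper_bound E (c - e / 2)).
    { intros z Hz. destruct (Rle_dec z (c - e / 2)); auto.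
      exfalso; apply Hn; exists z; split; auto; lra. }
    apply Hlub in Hc. lra. }
  destruct Hbelow as [z [Hz Hzc]].
  assert (Habove : ~ E (c + e / 2)) by (intros HE; apply Hub in HE; lra).
  apply not_all_ex_not in Habove. destruct Habove as [e0 Habove].
  apply imply_to_and in Habove. destruct Habove as [He0 Habove].
  apply not_all_ex_not in Habove. destruct Habove as [J0 Habove].
  assert (HJ0 : forall j, (J0 <= j)%nat -> Q e0 j -> y j < c + e / 2).
  { intros j Hj HQj. apply Rnot_le_lt. intros Hle. apply Habove. exists j. repeat split; auto; lra. }
  intros J. assert (He1 : 0 < Rmin e e0) by (apply Rmin_pos; auto).
  destruct (Hz _ He1 (Nat.max J J0)) as [j [Hj [HQj Hzj]]].
  exists j. split; [lia|].
  assert (Q e j) by (apply (Hmono (Rmin e e0)); auto; apply Rmin_l).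
  assert (Q e0 j) by (apply (Hmono (Rmin e e0)); auto; apply Rmin_r).
  assert (y j < c + e / 2) by (apply HJ0; auto; lia).
  split; auto. apply Rabs_def1; lra.
Qed.

Definition extend_prefix (q : nat -> R) (n : nat) (c : R) : nat -> R :=
  fun i => if Nat.ltb i n then q i else c.

Definition prefix_clusters (x : nat -> nat -> R) (q : nat -> R) (n : nat) : Prop :=
  forall e, 0 < e -> infinitely_often (fun j => forall i, (i < n)%nat -> Rabs (x j i - q i) < e).

Lemma prefix_clusters_extend x B q n :
  (forall j i, Rabs (x j i) <= B i) -> prefix_clusters x q n ->
  exists c, prefix_clusters x (extend_prefix q n c) (S n).
Proof.
  intros HB Hq.
  destruct (cluster_value_along (fun e j => forall i, (i < n)%nat -> Rabs (x j i - q i) < e)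
             (fun j => x j n) (B n)) as [c Hc]; auto.
  { intros e e' j He Hee' H i Hi. specialize (H i Hi). lra. }
  exists c. intros e He J. destruct (Hc e He J) as [j [Hj [H1 H2]]].
  exists j; split; auto. intros i Hi. unfold extend_prefix.
  destruct (Nat.ltb i n) eqn:E.
  - apply Nat.ltb_lt in E. auto.
  - apply Nat.ltb_ge in E. replace i with n by lia. auto.
Qed.

Fixpoint cluster_prefix (x : nat -> nat -> R) (n : nat) : nat -> R :=
  match n with
  | O => fun _ => 0
  | S n => let q := cluster_prefix x n in
      extend_prefix q n (epsilon (inhabits 0) (fun c => prefix_clusters x (extend_prefix q n c) (S n)))
  end.

(** Compactness of [prod_i [-B i, B i]], in the form of a cluster point. *)
Lemma diagonal_cluster_point (x : nat -> nat -> R) (B : nat -> R) :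
  (forall j i, Rabs (x j i) <= B i) ->
  exists p : nat -> R, forall P e, 0 < e ->
    infinitely_often (fun j => forall i, (i <= P)%nat -> Rabs (x j i - p i) < e).
Proof.
  intros HB.
  assert (HG : forall n, prefix_clusters x (cluster_prefix x n) n).
  { induction n as [|n IH].
    - intros e He J. exists J. split; auto. intros i Hi; lia.
    - apply (epsilon_spec (inhabits 0)
               (fun c => prefix_clusters x (extend_prefix (cluster_prefix x n) n c) (S n))).
      eapply prefix_clusters_extend; eauto. }
  assert (Hstable : forall i n, (i < n)%nat -> cluster_prefix x n i = cluster_prefix x (S i) i).
  { intros i n Hi. induction Hi; auto. rewrite <- IHHi. simpl. unfold extend_prefix.
    destruct (Nat.ltb i m) eqn:E; auto. apply Nat.ltb_ge in E; lia. }
  exists (fun i => cluster_prefix x (S i) i). intros P e He J.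
  destruct (HG (S P) e He J) as [j [Hj Hj2]].
  exists j; split; auto. intros i Hi. rewrite <- (Hstable i (S P)) by lia. apply Hj2; lia.
Qed.

(** * A nowhere analytic periodic function *)

(** The recursion gives [freq k ^ (2k+4) <= freq (S k)]; the gap lets the K-th
    term dominate the series of (K+1)-st derivatives (see [weight_off_diag]),
    and [(K+1) ^ (2K+2) <= freq K] beats the Cauchy estimates [p! m^p]. *)
Fixpoint freq_nat (k : nat) : nat :=
  match k with O => 16%nat | S k => ((freq_nat k * (k + 2)) ^ (2 * k + 4))%nat end.

Definition freq (k : nat) : R := INR (freq_nat k).

Lemma freq_S k : freq (S k) = (freq k * (INR k + 2)) ^ (2 * k + 4).
Proof. unfold freq. simpl freq_nat. now rewrite pow_INR, mult_INR, plus_INR. Qed.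

Lemma freq_ge16 k : 16 <= freq k.
Proof.
  induction k; [unfold freq; simpl; lra|].
  rewrite freq_S. pose proof (pos_INR k).
  apply Rle_trans with ((freq k * (INR k + 2)) ^ 1); [simpl; nra|].
  apply Rle_pow; [nra | lia].
Qed.

Lemma freq_ge1 k : 1 <= freq k.
Proof. pose proof (freq_ge16 k); lra. Qed.

Lemma freq_pow_le_S k : freq k ^ (2 * k + 4) <= freq (S k).
Proof. rewrite freq_S. apply pow_incr. pose proof (freq_ge16 k). pose proof (pos_INR k). nra. Qed.

Lemma freq_le i j : (i <= j)%nat -> freq i <= freq j.
Proof.
  induction 1 as [|j _ IH]; [lra|]. eapply Rle_trans; [exact IH|].
  eapply Rle_trans; [|apply freq_pow_le_S]. pose proof (freq_ge1 j).
  apply Rle_trans with (freq j ^ 1); [simpl; lra | apply Rle_pow; [lra | lia]].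
Qed.

Lemma freq_ge_pow2 k : 2 ^ (k + 4) <= freq k.
Proof.
  induction k; [unfold freq; simpl; lra|].
  eapply Rle_trans; [|apply freq_pow_le_S]. pose proof (freq_ge16 k).
  apply Rle_trans with (freq k ^ 2); [|apply Rle_pow; [lra | lia]].
  replace (S k + 4)%nat with (S (k + 4)) by lia. simpl in *. nra.
Qed.

Lemma freq_gap k : 8 * 2 ^ S k * freq k ^ (k + 2) <= freq (S k).
Proof.
  eapply Rle_trans; [|apply freq_pow_le_S].
  replace (2 * k + 4)%nat with ((k + 2) + (k + 2))%nat by lia.
  rewrite (pow_add (freq k) (k + 2) (k + 2)).
  apply Rmult_le_compat_r; [apply pow_le; pose proof (freq_ge1 k); lra|].
  apply Rle_trans with (16 ^ (k + 2)).
  - replace (16 ^ (k + 2)) with (2 ^ (4 * (k + 2))) by (rewrite pow_mult; f_equal; lra).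
    replace (8 * 2 ^ S k) with (2 ^ (S k + 3)) by (rewrite pow_add; simpl; ring).
    apply Rle_pow; [lra | lia].
  - apply pow_incr. pose proof (freq_ge16 k); lra.
Qed.

Lemma freq_growth K : INR (S K) ^ (2 * S K) <= freq K.
Proof.
  destruct K as [|K]; [unfold freq; simpl; lra|].
  rewrite freq_S. replace (2 * S (S K))%nat with (2 * K + 4)%nat by lia.
  apply pow_incr. rewrite !S_INR. pose proof (freq_ge16 K). pose proof (pos_INR K). nra.
Qed.

(** [weight p k = freq k ^ (p - k)] is the size of the k-th term of the p-th derivative. *)
Definition weight (p k : nat) : R := freq k ^ p / freq k ^ k.

Lemma weight_pos p k : 0 < weight p k.
Proof. pose proof (freq_ge1 k). apply Rdiv_lt_0_compat; apply pow_lt; lra. Qed.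

Lemma weight_S p k : weight (S p) k = weight p k * freq k.
Proof. unfold weight. simpl. pose proof (freq_ge1 k). field. apply pow_nonzero; lra. Qed.

Lemma weight_diag K : weight (S K) K = freq K.
Proof. unfold weight. simpl. pose proof (freq_ge1 K). field. apply pow_nonzero; lra. Qed.

Lemma weight_eq_1 k : weight k k = 1.
Proof. unfold weight. pose proof (freq_ge1 k). field. apply pow_nonzero; lra. Qed.

Lemma weight_le_pow p k : weight p k <= freq k ^ p.
Proof.
  unfold weight, Rdiv. pose proof (freq_ge1 k).
  assert (1 <= freq k ^ k) by (apply pow_R1_Rle; lra).
  assert (0 < freq k ^ p) by (apply pow_lt; lra).
  assert (/ freq k ^ k <= 1) by (rewrite <- Rinv_1; apply Rinv_le_contravar; lra).
  nra.
Qed.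

Lemma weight_high p k : (p < k)%nat -> weight p k <= / freq k.
Proof.
  intros Hpk. unfold weight. pose proof (freq_ge1 k).
  replace (freq k ^ k) with (freq k ^ p * freq k ^ S (k - S p)) by (rewrite <- pow_add; f_equal; lia).
  assert (0 < freq k ^ p) by (apply pow_lt; lra).
  assert (freq k <= freq k ^ S (k - S p)).
  { apply Rle_trans with (freq k ^ 1); [simpl; lra | apply Rle_pow; [lra | lia]]. }
  unfold Rdiv. rewrite Rinv_mult.
  replace (freq k ^ p * (/ freq k ^ p * / freq k ^ S (k - S p))) with (/ freq k ^ S (k - S p))
    by (field; split; apply pow_nonzero; lra).
  apply Rinv_le_contravar; lra.
Qed.

Definition weight_bound (p : nat) : R := freq p ^ p * 2 ^ p + 1.

Lemma weight_bound_pos p : 0 < weight_bound p.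
Proof.
  unfold weight_bound. pose proof (freq_ge1 p).
  assert (0 < freq p ^ p * 2 ^ p) by (apply Rmult_lt_0_compat; apply pow_lt; lra). lra.
Qed.

Lemma weight_bound_le p q : (p <= q)%nat -> weight_bound p <= weight_bound q.
Proof.
  intros Hpq. unfold weight_bound. apply Rplus_le_compat_r.
  pose proof (freq_ge1 p). pose proof (freq_le p q Hpq).
  apply Rmult_le_compat; try (apply pow_le; lra).
  - apply Rle_trans with (freq q ^ p); [apply pow_incr; lra | apply Rle_pow; [lra | lia]].
  - apply Rle_pow; [lra | lia].
Qed.

Lemma weight_half_geom p k : weight p k <= weight_bound p * (/ 2) ^ k.
Proof.
  unfold weight_bound. pose proof (freq_ge1 p).
  assert (0 <= freq p ^ p * 2 ^ p * (/ 2) ^ k) by (repeat apply Rmult_le_pos; apply pow_le; lra).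
  destruct (Compare_dec.le_lt_dec k p) as [Hk|Hk].
  - assert (weight p k <= freq p ^ p).
    { eapply Rle_trans; [apply weight_le_pow|]. apply pow_incr.
      split; [pose proof (freq_ge1 k); lra | apply freq_le, Hk]. }
    assert (1 <= 2 ^ p * (/ 2) ^ k).
    { replace p with (k + (p - k))%nat by lia. rewrite pow_add.
      replace (2 ^ k * 2 ^ (p - k) * (/ 2) ^ k) with ((2 * / 2) ^ k * 2 ^ (p - k))
        by (rewrite Rpow_mult_distr; ring).
      rewrite Rinv_r, pow1, Rmult_1_l by lra. apply pow_R1_Rle; lra. }
    assert (0 <= freq p ^ p) by (apply pow_le; lra).
    assert (0 < (/ 2) ^ k) by (apply pow_lt; lra).
    nra.
  - pose proof (weight_high p k Hk). pose proof (freq_ge_pow2 k).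
    assert (/ freq k <= (/ 2) ^ k).
    { rewrite pow_inv. apply Rinv_le_contravar; [apply pow_lt; lra|].
      eapply Rle_trans; [|eassumption]. apply Rle_pow; [lra | lia]. }
    lra.
Qed.

Lemma weight_below_diag K k : (k < K)%nat -> weight (S K) k <= freq K / 8 * (/ 2) ^ k.
Proof.
  intros Hk. destruct K as [|K]; [lia|].
  assert (H1 : weight (S (S K)) k <= freq K ^ (K + 2)).
  { eapply Rle_trans; [apply weight_le_pow|]. replace (K + 2)%nat with (S (S K)) by lia.
    apply pow_incr. split; [pose proof (freq_ge1 k); lra | apply freq_le; lia]. }
  pose proof (freq_gap K).
  assert (0 < 2 ^ S K) by (apply pow_lt; lra).
  assert (freq K ^ (K + 2) <= freq (S K) / 8 * (/ 2) ^ S K).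
  { rewrite pow_inv. apply Rmult_le_reg_r with (8 * 2 ^ S K); [lra|].
    replace (freq (S K) / 8 * / 2 ^ S K * (8 * 2 ^ S K)) with (freq (S K)) by (field; lra). lra. }
  assert ((/ 2) ^ S K <= (/ 2) ^ k).
  { rewrite !pow_inv. apply Rinv_le_contravar; [apply pow_lt; lra | apply Rle_pow; [lra | lia]]. }
  pose proof (freq_ge1 (S K)). nra.
Qed.

Lemma weight_above_diag K k : (K < k)%nat -> weight (S K) k <= freq K / 8 * (/ 2) ^ k.
Proof.
  intros Hk. rewrite pow_inv. assert (H2k : 0 < 2 ^ k) by (apply pow_lt; lra).
  destruct (Nat.eq_dec k (S K)) as [->|Hne].
  - rewrite weight_eq_1. pose proof (freq_ge_pow2 K) as H.
    replace (2 ^ (K + 4)) with (8 * 2 ^ S K) in H by (rewrite pow_add; simpl; ring).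
    apply Rmult_le_reg_r with (8 * 2 ^ S K); [lra|].
    replace (freq K / 8 * / 2 ^ S K * (8 * 2 ^ S K)) with (freq K) by (field; lra). lra.
  - pose proof (weight_high (S K) k ltac:(lia)). pose proof (freq_ge16 K).
    assert (/ freq k <= / 2 ^ k).
    { apply Rinv_le_contravar; [lra|]. eapply Rle_trans; [|apply freq_ge_pow2].
      apply Rle_pow; [lra | lia]. }
    assert (0 < / 2 ^ k) by (apply Rinv_0_lt_compat; lra). nra.
Qed.

Lemma weight_off_diag K k : k <> K -> weight (S K) k <= freq K / 8 * (/ 2) ^ k.
Proof.
  intros Hk. destruct (proj1 (Nat.lt_gt_cases k K) Hk);
    [apply weight_below_diag | apply weight_above_diag]; lia.
Qed.

Definition lacunary (p : nat) (phi t : R) : R :=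
  Series (fun k => weight p k * cos (freq k * t + phi)).

Definition lacunary_partial (p : nat) (phi : R) (n : nat) (t : R) : R :=
  sum_f_R0 (fun k => weight p k * cos (freq k * t + phi)) n.

Lemma lacunary_half_geom p phi t :
  half_geom_dominated (weight_bound p) (fun k => weight p k * cos (freq k * t + phi)).
Proof.
  intros k. rewrite Rabs_mult, (Rabs_right (weight p k)) by (left; apply weight_pos).
  pose proof (COS_bound (freq k * t + phi)). pose proof (weight_pos p k).
  assert (Rabs (cos (freq k * t + phi)) <= 1) by (apply Rabs_le; lra).
  pose proof (weight_half_geom p k). nra.
Qed.

Lemma lacunary_bound p phi t : Rabs (lacunary p phi t) <= 2 * weight_bound p.
Proof. apply half_geom_dominated_Series_bound, lacunary_half_geom. Qed.

Lemma lacunary_partial_derive p phi n t :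
  is_derive (lacunary_partial p phi n) t (lacunary_partial (S p) (phi + PI / 2) n t).
Proof.
  assert (Hterm : forall k, is_derive (fun s => weight p k * cos (freq k * s + phi)) t
                              (weight (S p) k * cos (freq k * t + (phi + PI / 2)))).
  { intros k. auto_derive; auto. rewrite weight_S.
    replace (freq k * t + (phi + PI / 2)) with ((freq k * t + phi) + PI / 2) by ring.
    rewrite cos_plus, cos_PI2, sin_PI2. ring. }
  induction n; unfold lacunary_partial; simpl; [apply Hterm|].
  apply (is_derive_plus (fun s => sum_f_R0 (fun k => weight p k * cos (freq k * s + phi)) n)
           (fun s => weight p (S n) * cos (freq (S n) * s + phi))); [apply IHn | apply Hterm].
Qed.

Lemma lacunary_CVU p phi c r : CVU (lacunary_partial p phi) (lacunary p phi) c r.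
Proof.
  intros eps Heps. pose proof (weight_bound_pos p) as Hb.
  destruct (pow_lt_1_zero (/ 2) ltac:(rewrite Rabs_right; lra) (eps / (2 * weight_bound p)))
    as [N HN]; [apply Rdiv_lt_0_compat; lra|].
  exists N. intros n y Hn _. specialize (HN (S n) ltac:(lia)).
  rewrite Rabs_right in HN by (left; apply pow_lt; lra).
  eapply Rle_lt_trans; [apply half_geom_dominated_tail, lacunary_half_geom|].
  apply Rmult_lt_compat_l with (r := 2 * weight_bound p) in HN; [|lra].
  replace (2 * weight_bound p * (eps / (2 * weight_bound p))) with eps in HN by (field; lra). lra.
Qed.

Lemma lacunary_continuous p phi : continuity (lacunary p phi).
Proof.
  intros y. apply (CVU_continuity (lacunary_partial p phi) (lacunary p phi) y (mkposreal 1 Rlt_0_1)).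
  - apply lacunary_CVU.
  - intros n z _. apply derivable_continuous_pt.
    exists (lacunary_partial (S p) (phi + PI / 2) n z). apply is_derive_Reals, lacunary_partial_derive.
  - unfold Boule; simpl. rewrite Rminus_diag, Rabs_R0; lra.
Qed.

Lemma lacunary_derive p phi t :
  derivable_pt_lim (lacunary p phi) t (lacunary (S p) (phi + PI / 2) t).
Proof.
  apply (derivable_pt_lim_CVU (lacunary_partial p phi) (lacunary_partial (S p) (phi + PI / 2))
           (lacunary p phi) (lacunary (S p) (phi + PI / 2)) t t (mkposreal 1 Rlt_0_1)).
  - unfold Boule; simpl. rewrite Rminus_diag, Rabs_R0; lra.
  - intros y n _. apply is_derive_Reals, lacunary_partial_derive.
  - intros y _. apply is_series_Reals, Series_correct.
    apply (half_geom_dominated_ex_series (weight_bound p)), lacunary_half_geom.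
  - apply lacunary_CVU.
  - intros y _. apply lacunary_continuous.
Qed.

Lemma lacunary_rotate p phi alpha t :
  cos alpha * lacunary p phi t + sin alpha * lacunary p (phi - PI / 2) t =
  Series (fun k => weight p k * cos (freq k * t + phi - alpha)).
Proof.
  assert (Hex : forall psi, ex_series (fun k => weight p k * cos (freq k * t + psi)))
    by (intros psi; apply (half_geom_dominated_ex_series (weight_bound p)), lacunary_half_geom).
  unfold lacunary. rewrite <- !Series_scal_l, <- Series_plus.
  - apply Series_ext. intros k.
    replace (freq k * t + (phi - PI / 2)) with ((freq k * t + phi) - PI / 2) by ring.
    rewrite !cos_minus, cos_PI2, sin_PI2. ring.
  - apply (ex_series_scal_l (cos alpha) (fun k => weight p k * cos (freq k * t + phi))), Hex.
  - apply (ex_series_scal_l (sin alpha) (fun k => weight p k * cos (freq k * t + (phi - PI / 2)))), Hex.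
Qed.

Lemma lacunary_large K phi t :
  freq K / 2 <= Rabs (lacunary (S K) phi t) + Rabs (lacunary (S K) (phi - PI / 2) t).
Proof.
  (* rotating by [alpha] turns the K-th term into [freq K]; the others sum to at most [freq K / 2] *)
  set (alpha := freq K * t + phi). set (b := weight (S K)).
  set (defect k := b k * (1 - cos (freq k * t + phi - alpha))).
  assert (Hb : ex_series b).
  { apply (half_geom_dominated_ex_series (weight_bound (S K))). intros k.
    rewrite Rabs_right by (left; apply weight_pos). apply weight_half_geom. }
  assert (Hdefect : forall k, 0 <= defect k <= freq K / 4 * (/ 2) ^ k).
  { intros k. unfold defect, b. pose proof (weight_pos (S K) k).
    pose proof (COS_bound (freq k * t + phi - alpha)). split; [nra|].
    destruct (Nat.eq_dec k K) as [->|Hk].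
    - unfold alpha. rewrite Rminus_diag, cos_0, Rminus_diag, Rmult_0_r.
      apply Rmult_le_pos; [pose proof (freq_ge1 K); lra | left; apply pow_lt; lra].
    - pose proof (weight_off_diag K k Hk). nra. }
  assert (Hex : ex_series defect).
  { apply (half_geom_dominated_ex_series (freq K / 4)). intros k.
    pose proof (Hdefect k). rewrite Rabs_right; lra. }
  assert (E : Series (fun k => b k * cos (freq k * t + phi - alpha)) = Series b - Series defect).
  { rewrite <- Series_minus by auto. apply Series_ext; intros; unfold defect; ring. }
  assert (L1 : b K <= Series b) by (apply Series_ge_term; auto; intros; left; apply weight_pos).
  assert (L2 : Series defect <= freq K / 2).
  { apply Rle_trans with (Series (fun k => freq K / 4 * (/ 2) ^ k)).
    - apply Series_le; [exact Hdefect | apply ex_series_half_geom].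
    - rewrite Series_half_geom. lra. }
  unfold b in E, L1. rewrite <- lacunary_rotate in E. rewrite weight_diag in L1.
  assert (Hunit : forall c x, -1 <= c <= 1 -> c * x <= Rabs x).
  { intros c x Hc. eapply Rle_trans; [apply Rle_abs|]. rewrite Rabs_mult.
    pose proof (Rabs_pos x). assert (Rabs c <= 1) by (apply Rabs_le; lra). nra. }
  pose proof (Hunit (cos alpha) (lacunary (S K) phi t) (COS_bound alpha)).
  pose proof (Hunit (sin alpha) (lacunary (S K) (phi - PI / 2) t) (SIN_bound alpha)).
  lra.
Qed.

(** [hder j] is the j-th derivative of [h t = \sum_k freq k ^ (-k) e^(i freq k t)]. *)
Definition hder (j : nat) (t : R) : Cx :=
  (lacunary j (INR j * (PI / 2)) t, lacunary j (INR j * (PI / 2) - PI / 2) t).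

Lemma hder_derive_fst j t : derivable_pt_lim (fun s => fst (hder j s)) t (fst (hder (S j) t)).
Proof.
  unfold hder; cbn [fst].
  replace (INR (S j) * (PI / 2)) with (INR j * (PI / 2) + PI / 2) by (rewrite S_INR; ring).
  apply lacunary_derive.
Qed.

Lemma hder_derive_snd j t : derivable_pt_lim (fun s => snd (hder j s)) t (snd (hder (S j) t)).
Proof.
  unfold hder; cbn [snd].
  replace (INR (S j) * (PI / 2) - PI / 2) with (INR j * (PI / 2) - PI / 2 + PI / 2)
    by (rewrite S_INR; ring).
  apply lacunary_derive.
Qed.

Lemma hder_continuous_fst j : continuity (fun s => fst (hder j s)).
Proof. apply lacunary_continuous. Qed.

Lemma hder_continuous_snd j : continuity (fun s => snd (hder j s)).
Proof. apply lacunary_continuous. Qed.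

Lemma Derive_n_hder_fst p t : Derive_n (fun s => fst (hder 0 s)) p t = fst (hder p t).
Proof.
  revert t. induction p as [|p IH]; intros t; [reflexivity|].
  simpl. rewrite (Derive_ext _ (fun s => fst (hder p s))) by auto.
  apply is_derive_unique, is_derive_Reals, hder_derive_fst.
Qed.

Lemma Derive_n_hder_snd p t : Derive_n (fun s => snd (hder 0 s)) p t = snd (hder p t).
Proof.
  revert t. induction p as [|p IH]; intros t; [reflexivity|].
  simpl. rewrite (Derive_ext _ (fun s => snd (hder p s))) by auto.
  apply is_derive_unique, is_derive_Reals, hder_derive_snd.
Qed.

Lemma hder_large K t : freq K / 2 <= Rabs (fst (hder (S K) t)) + Rabs (snd (hder (S K) t)).
Proof. apply lacunary_large. Qed.

Lemma hder_bound j t :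
  Rabs (fst (hder j t)) <= 2 * weight_bound j /\ Rabs (snd (hder j t)) <= 2 * weight_bound j.
Proof. split; apply lacunary_bound. Qed.

Lemma cos_sin_INR_mult s t n : cos s = cos t -> sin s = sin t ->
  cos (INR n * s) = cos (INR n * t) /\ sin (INR n * s) = sin (INR n * t).
Proof.
  intros Hc Hs. induction n as [|n [IHc IHs]]; [simpl; rewrite !Rmult_0_l; auto|].
  rewrite S_INR, !Rmult_plus_distr_r, !Rmult_1_l, !cos_plus, !sin_plus, IHc, IHs, Hc, Hs. auto.
Qed.

Lemma hder_periodic j s t : cos s = cos t -> sin s = sin t -> hder j s = hder j t.
Proof.
  intros Hc Hs. unfold hder, lacunary, freq.
  f_equal; apply Series_ext; intros k; destruct (cos_sin_INR_mult s t (freq_nat k) Hc Hs) as [C S'];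
    now rewrite !cos_plus, C, S'.
Qed.

Lemma fact_le_pow_self q : INR (fact q) <= INR q ^ q.
Proof.
  induction q as [|q IH]; [simpl; lra|].
  change (fact (S q)) with (S q * fact q)%nat. rewrite mult_INR, <- tech_pow_Rmult.
  apply Rmult_le_compat_l; [apply pos_INR|]. eapply Rle_trans; [exact IH|].
  apply pow_incr. rewrite S_INR. pose proof (pos_INR q). lra.
Qed.

Lemma INR_le_pow2 q : INR q <= 2 ^ q.
Proof.
  induction q as [|q IH]; [simpl; lra|]. rewrite S_INR. simpl.
  assert (1 <= 2 ^ q) by (apply pow_R1_Rle; lra). lra.
Qed.

Lemma freq_beats_Cauchy_bounds (M C : R) : 1 <= M -> 0 < C ->
  exists K, C * INR (fact (S K)) * 2 ^ S K * M ^ S (S K) < freq K / 2.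
Proof.
  intros HM HC. destruct (INR_unbounded (2 * C * M + 4 * M)) as [K HK].
  exists K. set (q := S K). set (A := INR q ^ q).
  assert (Hq : 2 * C * M + 4 * M < INR q) by (unfold q; rewrite S_INR; lra).
  assert (HCM0 : 0 < C * M) by nra.
  assert (HA : A * A <= freq K).
  { unfold A. rewrite <- pow_add. replace (q + q)%nat with (2 * S K)%nat by (unfold q; lia).
    apply freq_growth. }
  assert (H2q : 0 < 2 ^ q) by (apply pow_lt; lra).
  assert (HCM : 2 * C * M < 2 ^ q) by (pose proof (INR_le_pow2 q); lra).
  assert (HX : 2 ^ q * (2 ^ q * M ^ q) <= A).
  { unfold A. replace (2 ^ q * (2 ^ q * M ^ q)) with ((4 * M) ^ q)
      by (rewrite !Rpow_mult_distr; replace 4 with (2 * 2) by ring; rewrite Rpow_mult_distr; ring).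
    apply pow_incr. split; lra. }
  assert (Hf : INR (fact q) <= A) by apply fact_le_pow_self.
  assert (0 < M ^ q) by (apply pow_lt; lra).
  assert (0 <= INR (fact q)) by apply pos_INR.
  assert (Hfact_le : C * INR (fact q) * 2 ^ q * M ^ S q <= C * M * A * (2 ^ q * M ^ q)).
  { rewrite <- (tech_pow_Rmult M q). replace (C * INR (fact q) * 2 ^ q * (M * M ^ q))
      with (C * M * INR (fact q) * (2 ^ q * M ^ q)) by ring.
    apply Rmult_le_compat_r; [nra|]. apply Rmult_le_compat_l; nra. }
  assert (Hpow_le : C * M * A * (2 ^ q * M ^ q) * 2 ^ q <= C * M * A * A).
  { rewrite Rmult_assoc, (Rmult_comm _ (2 ^ q)). apply Rmult_le_compat_l; [|lra].
    apply Rmult_le_pos; [nra|]. unfold A. apply pow_le, pos_INR. }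
  assert (0 < A) by (unfold A; apply pow_lt; unfold q; rewrite S_INR; pose proof (pos_INR K); lra).
  assert (Hsmall : C * M * A * A * 2 < A * A * 2 ^ q).
  { replace (C * M * A * A * 2) with (2 * C * M * (A * A)) by ring.
    rewrite (Rmult_comm (A * A)). apply Rmult_lt_compat_r; nra. }
  assert (C * M * A * (2 ^ q * M ^ q) * 2 < A * A) by nra.
  lra.
Qed.

Section ShiftedPseries.
Variables (m t0 : R) (b : nat -> R).
Hypotheses (Hm : 1 <= m) (Hb : coef_bounded m b).

Lemma coef_bounded_shift_ex_derive_n y k :
  Rabs (y - t0) < / m -> ex_derive_n (fun s => PSeries b (s - t0)) k y.
Proof.
  intros Hy. apply (ex_derive_n_comp_trans (PSeries b) k y (- t0)).
  apply ex_derive_n_PSeries, (coef_bounded_in_radius m); auto.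
Qed.

Lemma coef_bounded_shift_Derive_n_bound p s : Rabs (s - t0) <= / (4 * m) ->
  Rabs (Derive_n (fun y => PSeries b (y - t0)) p s) <= 2 * INR (fact p) * 2 ^ p * m ^ S p.
Proof.
  intros Hs.
  change (fun y => PSeries b (y - t0)) with (fun y => PSeries b (y + - t0)).
  rewrite (Derive_n_comp_trans (PSeries b) p s (- t0)), Derive_n_PSeries.
  - apply coef_bounded_PSeries_derive_n_bound; auto.
  - apply (coef_bounded_in_radius m); auto.
    eapply Rle_lt_trans; [exact Hs|]. apply Rinv_lt_contravar; nra.
Qed.

End ShiftedPseries.

Lemma near_both_centres (M t1 t2 : R) : 0 < M -> Rabs (t1 - t2) <= / (4 * M) ->
  forall s, Rabs (s - t1) < / (8 * M) -> Rabs (s - t1) < / M /\ Rabs (s - t2) < / M.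
Proof.
  intros HM Ht s Hs.
  assert (/ (8 * M) + / (4 * M) < / M).
  { replace (/ (8 * M) + / (4 * M)) with (3 / 8 * / M) by (field; lra).
    pose proof (Rinv_0_lt_compat M HM). lra. }
  split; [pose proof (Rabs_pos (t1 - t2)); lra|].
  replace (s - t2) with ((s - t1) + (t1 - t2)) by ring.
  eapply Rle_lt_trans; [apply Rabs_triang | lra].
Qed.

Lemma Derive_n_pseries_difference_bound (g : R -> R) (d M t1 t2 : R) (b1 b2 : nat -> R) p :
  1 <= M -> coef_bounded M b1 -> coef_bounded M b2 -> Rabs (t1 - t2) <= / (4 * M) ->
  (forall s, Rabs (s - t1) < / (8 * M) ->
     d * g s = PSeries b1 (s - t1) - PSeries b2 (s - t2)) ->
  Rabs d * Rabs (Derive_n g p t1) <= 4 * INR (fact p) * 2 ^ p * M ^ S p.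
Proof.
  intros HM Hb1 Hb2 Ht Heq.
  assert (HM0 : 0 < M) by lra.
  set (e := mkposreal (/ (8 * M)) ltac:(apply Rinv_0_lt_compat; lra)).
  pose proof (near_both_centres M t1 t2 HM0 Ht) as Hnear.
  assert (Hex : forall b tc, coef_bounded M b ->
            (forall y, Rabs (y - t1) < / (8 * M) -> Rabs (y - tc) < / M) ->
            locally t1 (fun y => forall k, (k <= p)%nat -> ex_derive_n (fun s => PSeries b (s - tc)) k y)).
  { intros b tc Hb Hy. exists e. intros y Hy' k _.
    apply (coef_bounded_shift_ex_derive_n M); auto. }
  assert (E := Derive_n_ext_loc (fun s => d * g s)
                 (fun s => PSeries b1 (s - t1) - PSeries b2 (s - t2)) p t1
                 ltac:(exists e; intros y Hy; apply Heq, Hy)).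
  rewrite Derive_n_scal_l, Derive_n_minus in E;
    [|apply Hex; auto; apply Hnear | apply Hex; auto; apply Hnear].
  rewrite <- Rabs_mult, E.
  assert (B1 := coef_bounded_shift_Derive_n_bound M t1 b1 HM Hb1 p t1).
  assert (B2 := coef_bounded_shift_Derive_n_bound M t2 b2 HM Hb2 p t1 Ht).
  rewrite Rminus_diag, Rabs_R0 in B1. specialize (B1 (Rlt_le _ _ (Rinv_0_lt_compat (4 * M) ltac:(lra)))).
  unfold Rminus at 1. eapply Rle_trans; [apply Rabs_triang|]. rewrite Rabs_Ropp. lra.
Qed.

Definition Cscale (c : R) (z : Cx) : Cx := (c * fst z, c * snd z).

(** The difference of the two sums is [(c1 - c2) h], whose Cauchy estimates at [t1]
    would contradict [hder_large]. *)
Lemma no_two_bounded_expansions (F : R -> Cx) (c1 c2 : R) (m : nat) (t1 t2 : R)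
    (a1 a2 : nat -> Cx) :
  c1 <> c2 ->
  bounded_expansion (fun t => Cadd (F t) (Cscale c1 (hder 0 t))) m t1 a1 ->
  bounded_expansion (fun t => Cadd (F t) (Cscale c2 (hder 0 t))) m t2 a2 ->
  Rabs (t1 - t2) <= / (4 * INR m) -> False.
Proof.
  intros Hc [HM [_ [Ha1 [Hb1 He1]]]] [_ [_ [Ha2 [Hb2 He2]]]] Ht.
  set (M := INR m) in *. set (d := c1 - c2).
  assert (HM0 : 0 < M) by lra.
  assert (Hd : 0 < Rabs d) by (apply Rabs_pos_lt; unfold d; lra).
  pose proof (near_both_centres M t1 t2 HM0 Ht) as Hnear.
  assert (Hdiff : forall s, Rabs (s - t1) < / (8 * M) ->
            Cscale d (hder 0 s) = Csub (Cpseries a1 t1 s) (Cpseries a2 t2 s)).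
  { intros s Hs. destruct (Hnear s Hs) as [N1 N2].
    rewrite <- (He1 s N1), <- (He2 s N2). unfold Cscale, Csub, Cadd, d; simpl. f_equal; ring. }
  pose proof (freq_beats_Cauchy_bounds M (8 / Rabs d) HM ltac:(apply Rdiv_lt_0_compat; lra))
    as [K HK].
  assert (Bfst := Derive_n_pseries_difference_bound (fun s => fst (hder 0 s)) d M t1 t2
                    _ _ (S K) HM Ha1 Ha2 Ht (fun s Hs => f_equal fst (Hdiff s Hs))).
  assert (Bsnd := Derive_n_pseries_difference_bound (fun s => snd (hder 0 s)) d M t1 t2
                    _ _ (S K) HM Hb1 Hb2 Ht (fun s Hs => f_equal snd (Hdiff s Hs))).
  rewrite Derive_n_hder_fst in Bfst. rewrite Derive_n_hder_snd in Bsnd.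
  pose proof (hder_large K t1) as Hlarge.
  set (X := INR (fact (S K)) * 2 ^ S K * M ^ S (S K)) in *.
  replace (8 / Rabs d * INR (fact (S K)) * 2 ^ S K * M ^ S (S K)) with (8 * X / Rabs d) in HK
    by (unfold X; field; lra).
  replace (4 * INR (fact (S K)) * 2 ^ S K * M ^ S (S K)) with (4 * X) in Bfst, Bsnd by (unfold X; ring).
  assert (Rabs d * (freq K / 2) <= 8 * X) by nra.
  assert (8 * X < Rabs d * (freq K / 2)).
  { apply Rmult_lt_reg_r with (/ Rabs d); [apply Rinv_0_lt_compat; lra|].
    replace (Rabs d * (freq K / 2) * / Rabs d) with (freq K / 2) by (field; lra). lra. }
  lra.
Qed.

(** * Density *)

Lemma gamma_eq_angles Phi rho Rr : rho < 1 -> 1 < Rr -> injective_on_annulus Phi rho Rr ->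
  forall s t, gamma Phi s = gamma Phi t -> cos s = cos t /\ sin s = sin t.
Proof.
  intros H1 H2 Hinj s t E.
  assert (A : forall u, in_annulus rho Rr (Cexpi u))
    by (intros u; unfold in_annulus; rewrite Cnorm_Cexpi; lra).
  pose proof (Hinj _ _ (A s) (A t) E) as E2. unfold Cexpi in E2. now inversion E2.
Qed.

Definition curve_param (Phi : Cx -> Cx) (z : curve Phi) : R :=
  proj1_sig (constructive_indefinite_description _ (proj2_sig z)).

Lemma curve_param_spec Phi z : proj1_sig z = gamma Phi (curve_param Phi z).
Proof. unfold curve_param. now destruct (constructive_indefinite_description _ _). Qed.

Definition perturb (Phi : Cx -> Cx) (f : curve Phi -> Cx) (c : R) : curve Phi -> Cx :=
  fun z => Cadd (f z) (Cscale c (hder 0 (curve_param Phi z))).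

Lemma pullback_perturb Phi rho Rr f c : rho < 1 -> 1 < Rr -> injective_on_annulus Phi rho Rr ->
  forall t, pullback Phi (perturb Phi f c) t = Cadd (pullback Phi f t) (Cscale c (hder 0 t)).
Proof.
  intros H1 H2 Hinj t. unfold pullback, perturb. do 2 f_equal.
  pose proof (curve_param_spec Phi (curve_pt Phi t)) as E. simpl in E.
  destruct (gamma_eq_angles Phi rho Rr H1 H2 Hinj _ _ (eq_sym E)). now apply hder_periodic.
Qed.

Lemma derivs_upto_ext k (u v : R -> Cx) D :
  (forall t, u t = v t) -> derivs_upto k u D -> derivs_upto k v D.
Proof. intros H [H0 H1]. split; auto. intros t; rewrite <- H; auto. Qed.

Lemma derivs_upto_add_hder k (u : R -> Cx) (D : nat -> R -> Cx) c :
  derivs_upto k u D ->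
  derivs_upto k (fun t => Cadd (u t) (Cscale c (hder 0 t)))
                (fun j t => Cadd (D j t) (Cscale c (hder j t))).
Proof.
  intros [H0 [H1 H2]]. split; [|split].
  - intros t. now rewrite H0.
  - intros j Hj. destruct (H1 j Hj) as [C1 C2]. split.
    + apply (continuity_plus (fun t => fst (D j t)) (fun t => c * fst (hder j t))); auto.
      apply (continuity_scal (fun t => fst (hder j t))), hder_continuous_fst.
    + apply (continuity_plus (fun t => snd (D j t)) (fun t => c * snd (hder j t))); auto.
      apply (continuity_scal (fun t => snd (hder j t))), hder_continuous_snd.
  - intros j Hj t. destruct (H2 j Hj t) as [D1 D2]. split.
    + apply (derivable_pt_lim_plus (fun t => fst (D j t)) (fun t => c * fst (hder j t))); auto.
      apply (derivable_pt_lim_scal (fun t => fst (hder j t))), hder_derive_fst.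
    + apply (derivable_pt_lim_plus (fun t => snd (D j t)) (fun t => c * snd (hder j t))); auto.
      apply (derivable_pt_lim_scal (fun t => snd (hder j t))), hder_derive_snd.
Qed.

(** Index of the cell of length [1 / (4m)] containing [t0 >= -m]. *)
Definition grid_cell (m : nat) (t0 : R) : nat := Z.to_nat (up ((t0 + INR m) * (4 * INR m))).

Lemma grid_cell_close m t1 t2 : 1 <= INR m -> Rabs t1 <= INR m -> Rabs t2 <= INR m ->
  grid_cell m t1 = grid_cell m t2 -> Rabs (t1 - t2) <= / (4 * INR m).
Proof.
  intros Hm H1 H2 E. unfold grid_cell in E.
  apply Rabs_le_between in H1. apply Rabs_le_between in H2.
  set (y1 := (t1 + INR m) * (4 * INR m)) in E. set (y2 := (t2 + INR m) * (4 * INR m)) in E.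
  assert (Hy1 : 0 <= y1) by (unfold y1; apply Rmult_le_pos; lra).
  assert (Hy2 : 0 <= y2) by (unfold y2; apply Rmult_le_pos; lra).
  destruct (archimed y1) as [A1 B1], (archimed y2) as [A2 B2].
  assert (P1 : (0 < up y1)%Z) by (apply lt_IZR; lra).
  assert (P2 : (0 < up y2)%Z) by (apply lt_IZR; lra).
  assert (E2 : up y1 = up y2) by (rewrite <- (Z2Nat.id (up y1)), <- (Z2Nat.id (up y2)), E; lia).
  rewrite E2 in A1, B1.
  assert (Hdiff : Rabs ((t1 - t2) * (4 * INR m)) < 1)
    by (replace ((t1 - t2) * (4 * INR m)) with (y1 - y2) by (unfold y1, y2; ring); apply Rabs_def1; lra).
  rewrite Rabs_mult, (Rabs_right (4 * INR m)) in Hdiff by lra.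
  left. apply Rmult_lt_reg_r with (4 * INR m); [lra|]. rewrite Rinv_l by lra. lra.
Qed.

Lemma exists_nowhere_analytic_perturbation (Phi : Cx -> Cx) (rho Rr : R) (f : curve Phi -> Cx) (a b : R) :
  rho < 1 -> 1 < Rr -> injective_on_annulus Phi rho Rr -> a < b ->
  exists c, a <= c <= b /\ nowhere_real_analytic Phi (perturb Phi f c).
Proof.
  intros Hrho1 HR Hinj Hab.
  set (U c t := Cadd (pullback Phi f t) (Cscale c (hder 0 t))).
  (* by [no_two_bounded_expansions] each pair (m, cell) is witnessed by at most one [c],
     so [u] enumerates every [c] for which [perturb Phi f c] is analytic somewhere *)
  set (bad c m cell := exists t0 a0, bounded_expansion (U c) m t0 a0 /\ grid_cell m t0 = cell).
  set (u n := let p := Cantor.of_nat n in epsilon (inhabits 0) (fun c => bad c (fst p) (snd p))).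
  destruct (interval_avoids_sequence u a b Hab) as [x [Hx Hxu]].
  exists x. split; auto. intros t0 Han.
  destruct (real_analytic_at_bounded_expansion Phi _ t0 Han) as [m [a0 HG]].
  assert (HGx : bounded_expansion (U x) m t0 a0).
  { destruct HG as [H1 [H2 [H3 [H4 H5]]]]. repeat split; auto.
    intros t Ht. rewrite <- H5 by exact Ht. unfold U. now rewrite (pullback_perturb Phi rho Rr). }
  set (n := Cantor.to_nat (m, grid_cell m t0)).
  assert (HB : bad (u n) m (grid_cell m t0)).
  { unfold u, n. rewrite Cantor.cancel_of_to.
    apply (epsilon_spec (inhabits 0) (fun c => bad c m (grid_cell m t0))). exists x, t0, a0. auto. }
  destruct HB as [t1 [a1 [HG1 Hcell]]].
  apply (Hxu n). destruct (Req_dec x (u n)) as [E|E]; auto. exfalso.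
  apply (no_two_bounded_expansions (pullback Phi f) x (u n) m t0 t1 a0 a1 E HGx HG1).
  destruct HGx as [Hm [Ht0 _]], HG1 as [_ [Ht1 _]].
  apply grid_cell_close; auto.
Qed.

Lemma Ck_dense_nowhere_real_analytic (Phi : Cx -> Cx) (rho Rr : R) k :
  rho < 1 -> 1 < Rr -> injective_on_annulus Phi rho Rr ->
  Ck_dense Phi k (fun f => in_Ck Phi k f /\ nowhere_real_analytic Phi f).
Proof.
  intros Hrho1 HR Hinj f [Df HDf] N eps Heps.
  pose proof (weight_bound_pos N) as HBN.
  set (c0 := eps / (4 * weight_bound N)).
  assert (Hc0 : 0 < c0) by (apply Rdiv_lt_0_compat; lra).
  destruct (exists_nowhere_analytic_perturbation Phi rho Rr f (c0 / 2) c0) as [c [Hc Hna]]; auto; [lra|].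
  set (Dg j t := Cadd (Df j t) (Cscale c (hder j t))).
  assert (HDg : derivs_upto k (pullback Phi (perturb Phi f c)) Dg).
  { apply (derivs_upto_ext k (fun t => Cadd (pullback Phi f t) (Cscale c (hder 0 t)))).
    - intros t. symmetry. apply (pullback_perturb Phi rho Rr); auto.
    - now apply derivs_upto_add_hder. }
  exists (perturb Phi f c). split; [split; [exists Dg; auto | auto]|]. split; [exists Dg; auto|].
  exists Df, Dg. split; [|split]; auto.
  intros j Hj _ t. unfold Dg, Cscale.
  destruct (Df j t) as [x y]. unfold Csub, Cadd; cbn [fst snd].
  replace (x + c * fst (hder j t) - x) with (c * fst (hder j t)) by ring.
  replace (y + c * snd (hder j t) - y) with (c * snd (hder j t)) by ring.
  eapply Rle_trans; [apply Cnorm_le_Rabs_sum|]. cbn [fst snd].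
  rewrite !Rabs_mult, (Rabs_right c) by lra.
  destruct (hder_bound j t) as [B1 B2]. pose proof (weight_bound_le j N Hj).
  assert (c * (2 * weight_bound N) <= eps / 2).
  { apply Rle_trans with (c0 * (2 * weight_bound N)); [apply Rmult_le_compat_r; lra|].
    unfold c0. right. field. lra. }
  assert (c * Rabs (fst (hder j t)) <= c * (2 * weight_bound N)) by (apply Rmult_le_compat_l; lra).
  assert (c * Rabs (snd (hder j t)) <= c * (2 * weight_bound N)) by (apply Rmult_le_compat_l; lra).
  lra.
Qed.

(** * Closedness of the sets of bounded expansions *)

Lemma Rabs_pow_le_1 x n : Rabs x <= 1 -> Rabs (x ^ n) <= 1.
Proof.
  intros Hx. rewrite <- RPow_abs, <- (pow1 n). apply pow_incr. split; [apply Rabs_pos | exact Hx].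
Qed.

Lemma pow_diff_le (x y : R) n : Rabs x <= 1 -> Rabs y <= 1 ->
  Rabs (y ^ n - x ^ n) <= INR n * Rabs (y - x).
Proof.
  intros Hx Hy. induction n as [|n IH]; [simpl; rewrite Rminus_diag, Rabs_R0; lra|].
  replace (y ^ S n - x ^ S n) with (y * (y ^ n - x ^ n) + x ^ n * (y - x)) by (simpl; ring).
  eapply Rle_trans; [apply Rabs_triang|]. rewrite !Rabs_mult, S_INR.
  assert (Rabs (x ^ n) <= 1) by (apply Rabs_pow_le_1, Hx).
  pose proof (Rabs_pos (y ^ n - x ^ n)). pose proof (Rabs_pos (y - x)).
  pose proof (Rabs_pos y). pose proof (Rabs_pos (x ^ n)). nra.
Qed.

Lemma partial_sums_close (b c : nat -> R) (y x eta B : R) P :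
  Rabs x <= 1 -> Rabs y <= 1 -> Rabs (y - x) <= eta -> 0 <= B ->
  (forall n, (n <= P)%nat -> Rabs (b n - c n) <= eta) ->
  (forall n, (n <= P)%nat -> Rabs (c n) <= B) ->
  Rabs (sum_f_R0 (fun n => b n * y ^ n) P - sum_f_R0 (fun n => c n * x ^ n) P)
    <= INR (S P) * (1 + B * INR P) * eta.
Proof.
  intros Hx Hy Hyx HB Hb Hc.
  rewrite <- minus_sum. eapply Rle_trans; [apply sum_f_R0_triangle|].
  replace (INR (S P) * (1 + B * INR P) * eta) with (sum_f_R0 (fun _ => (1 + B * INR P) * eta) P)
    by (rewrite sum_cte; ring).
  apply sum_Rle. intros n Hn.
  replace (b n * y ^ n - c n * x ^ n) with ((b n - c n) * y ^ n + c n * (y ^ n - x ^ n)) by ring.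
  eapply Rle_trans; [apply Rabs_triang|]. rewrite !Rabs_mult.
  assert (Rabs (y ^ n) <= 1) by (apply Rabs_pow_le_1, Hy).
  pose proof (Hb n Hn). pose proof (Hc n Hn). pose proof (pow_diff_le x y n Hx Hy).
  pose proof (le_INR _ _ Hn). pose proof (pos_INR n).
  pose proof (Rabs_pos (b n - c n)). pose proof (Rabs_pos (c n)).
  pose proof (Rabs_pos (y ^ n - x ^ n)). pose proof (Rabs_pos (y ^ n)).
  assert (Rabs (y ^ n - x ^ n) <= INR P * eta) by nra.
  nra.
Qed.

Lemma pseries_values_close (M : R) (b c : nat -> R) (x y eta : R) (P : nat) :
  1 <= M -> coef_bounded M b -> coef_bounded M c ->
  Rabs x <= / (2 * M) -> Rabs y <= / (2 * M) -> Rabs (y - x) <= eta ->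
  (forall n, (n <= P)%nat -> Rabs (b n - c n) <= eta) ->
  Rabs (PSeries b y - PSeries c x)
    <= 4 * M * (/ 2) ^ S P + INR (S P) * (1 + M ^ S P * INR P) * eta.
Proof.
  intros HM Hb Hc Hx Hy Hyx Hbc.
  set (r := / (2 * M)) in Hx, Hy.
  assert (Hr : 0 < r) by (apply Rinv_0_lt_compat; lra).
  assert (HMr : M * r = / 2) by (unfold r; field; lra).
  assert (Hr1 : r <= 1) by (unfold r; rewrite <- Rinv_1; apply Rinv_le_contravar; lra).
  assert (Tb := coef_bounded_PSeries_tail M b HM Hb y r P (Rlt_le _ _ Hr) (Req_le _ _ HMr) Hy).
  assert (Tc := coef_bounded_PSeries_tail M c HM Hc x r P (Rlt_le _ _ Hr) (Req_le _ _ HMr) Hx).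
  assert (Hsum : Rabs (sum_f_R0 (fun n => b n * y ^ n) P - sum_f_R0 (fun n => c n * x ^ n) P)
                 <= INR (S P) * (1 + M ^ S P * INR P) * eta).
  { apply partial_sums_close; auto; try lra; [apply pow_le; lra|].
    intros n Hn. eapply Rle_trans; [apply Hc | apply Rle_pow; [lra | lia]]. }
  rewrite HMr in Tb, Tc.
  set (sb := sum_f_R0 (fun n => b n * y ^ n) P) in *.
  set (sc := sum_f_R0 (fun n => c n * x ^ n) P) in *.
  replace (PSeries b y - PSeries c x) with ((PSeries b y - sb) + (sb - sc) - (PSeries c x - sc)) by ring.
  unfold Rminus at 1. eapply Rle_trans; [apply Rabs_triang|]. rewrite Rabs_Ropp.
  eapply Rle_trans; [apply Rplus_le_compat_r, Rabs_triang|]. lra.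
Qed.

Lemma pseries_values_close_small (M e : R) : 1 <= M -> 0 < e ->
  exists P eta, 0 < eta /\ eta <= / (4 * M) /\
    4 * M * (/ 2) ^ S P + INR (S P) * (1 + M ^ S P * INR P) * eta <= e.
Proof.
  intros HM He.
  destruct (pow_lt_1_zero (/ 2) ltac:(rewrite Rabs_right; lra) (e / (8 * M))) as [P HP];
    [apply Rdiv_lt_0_compat; lra|].
  specialize (HP (S P) ltac:(lia)). rewrite Rabs_right in HP by (left; apply pow_lt; lra).
  set (K := INR (S P) * (1 + M ^ S P * INR P)).
  assert (HK : 0 <= K).
  { unfold K. pose proof (pos_INR P). pose proof (pow_le M (S P) ltac:(lra)).
    apply Rmult_le_pos; [apply pos_INR | nra]. }
  exists P, (Rmin (/ (4 * M)) (e / 2 / (K + 1))). split; [|split; [apply Rmin_l|]].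
  - apply Rmin_pos; [apply Rinv_0_lt_compat | apply Rdiv_lt_0_compat]; lra.
  - assert (4 * M * (/ 2) ^ S P <= e / 2).
    { apply Rmult_lt_compat_l with (r := 4 * M) in HP; [|lra].
      replace (4 * M * (e / (8 * M))) with (e / 2) in HP by (field; lra). lra. }
    assert (K * Rmin (/ (4 * M)) (e / 2 / (K + 1)) <= e / 2).
    { pose proof (Rmin_r (/ (4 * M)) (e / 2 / (K + 1))).
      pose proof (Rmin_pos (/ (4 * M)) (e / 2 / (K + 1))
                    ltac:(apply Rinv_0_lt_compat; lra) ltac:(apply Rdiv_lt_0_compat; lra)).
      apply Rle_trans with ((K + 1) * (e / 2 / (K + 1))); [nra | right; field; lra]. }
    fold K. lra.
Qed.

Lemma limit_of_close_expansions (M t Ft ts : R) (bj : nat -> nat -> R) (tj : nat -> R)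
    (bs : nat -> R) (G : nat -> R) :
  1 <= M -> (forall j, coef_bounded M (bj j)) -> coef_bounded M bs ->
  (forall j, Rabs (G j - Ft) <= / INR (S j)) ->
  (forall j, Rabs (t - tj j) <= / (2 * M) -> G j = PSeries (bj j) (t - tj j)) ->
  Rabs (t - ts) < / (4 * M) ->
  (forall P eta, 0 < eta -> infinitely_often (fun j => Rabs (tj j - ts) < eta /\
       forall n, (n <= P)%nat -> Rabs (bj j n - bs n) < eta)) ->
  Ft = PSeries bs (t - ts).
Proof.
  intros HM Hbj Hbs HG HGe Ht Hcl.
  assert (Hclose : Rabs (Ft - PSeries bs (t - ts)) <= 0).
  { apply Rle_plus_epsilon. intros e He. rewrite Rplus_0_l.
    destruct (pseries_values_close_small M (e / 2) HM ltac:(lra)) as [P [eta [Heta [Heta4 Hsmall]]]].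
    destruct (INR_unbounded (2 / e)) as [J HJ].
    destruct (Hcl P eta Heta J) as [j [Hj [Htj Hbjs]]].
    assert (Hyx : Rabs ((t - tj j) - (t - ts)) <= eta).
    { replace ((t - tj j) - (t - ts)) with (- (tj j - ts)) by ring. rewrite Rabs_Ropp. lra. }
    assert (H4 : / (4 * M) + / (4 * M) = / (2 * M)) by (field; lra).
    assert (Hx : Rabs (t - ts) <= / (2 * M)) by (pose proof (Rinv_0_lt_compat (4 * M) ltac:(lra)); lra).
    assert (Hy : Rabs (t - tj j) <= / (2 * M)).
    { replace (t - tj j) with ((t - ts) + ((t - tj j) - (t - ts))) by ring.
      eapply Rle_trans; [apply Rabs_triang | lra]. }
    assert (E1 : Rabs (G j - Ft) <= e / 2).
    { eapply Rle_trans; [apply HG|]. rewrite S_INR.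
      assert (INR J <= INR j) by (apply le_INR; lia).
      replace (e / 2) with (/ (2 / e)) by (field; lra).
      apply Rinv_le_contravar; [apply Rdiv_lt_0_compat|]; lra. }
    assert (E2 := pseries_values_close M (bj j) bs (t - ts) (t - tj j) eta P HM (Hbj j) Hbs Hx Hy Hyx
                    ltac:(intros n Hn; left; apply Hbjs, Hn)).
    rewrite (HGe j Hy) in E1.
    replace (Ft - PSeries bs (t - ts))
      with ((PSeries (bj j) (t - tj j) - PSeries bs (t - ts)) - (PSeries (bj j) (t - tj j) - Ft)) by ring.
    unfold Rminus at 1. eapply Rle_trans; [apply Rabs_triang|]. rewrite Rabs_Ropp. lra. }
  pose proof (Rabs_pos (Ft - PSeries bs (t - ts))).
  apply Rabs_le_between in Hclose. lra.
Qed.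

Definition expansion_code (t0 : R) (a : nat -> Cx) (i : nat) : R :=
  match i with
  | O => t0
  | S i => if Nat.even i then fst (a (Nat.div2 i)) else snd (a (Nat.div2 i))
  end.

Lemma expansion_code_fst t0 a n : expansion_code t0 a (S (2 * n)) = fst (a n).
Proof. unfold expansion_code. rewrite Nat.even_mul, Nat.div2_double. reflexivity. Qed.

Lemma expansion_code_snd t0 a n : expansion_code t0 a (S (S (2 * n))) = snd (a n).
Proof.
  unfold expansion_code. rewrite Nat.div2_succ_double, Nat.even_succ, Nat.odd_mul. reflexivity.
Qed.

Lemma expansion_code_bound u m t0 a i :
  bounded_expansion u m t0 a -> Rabs (expansion_code t0 a i) <= INR m ^ S i.
Proof.
  intros [Hm [Ht [Ha1 [Ha2 _]]]]. destruct i as [|i]; [simpl; lra|].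
  assert (INR m ^ S (Nat.div2 i) <= INR m ^ S (S i))
    by (apply Rle_pow; [lra | pose proof (Nat.le_div2_diag_l i); lia]).
  unfold expansion_code.
  destruct (Nat.even i); [pose proof (Ha1 (Nat.div2 i)) | pose proof (Ha2 (Nat.div2 i))]; lra.
Qed.

Lemma cluster_point_bound (x : nat -> nat -> R) (p : nat -> R) (B : R) i :
  (forall j, Rabs (x j i) <= B) ->
  (forall e, 0 < e -> infinitely_often (fun j => Rabs (x j i - p i) < e)) -> Rabs (p i) <= B.
Proof.
  intros Hx Hp. apply Rle_plus_epsilon. intros e He.
  destruct (Hp e He 0%nat) as [j [_ Hj]]. pose proof (Hx j).
  replace (p i) with (x j i - (x j i - p i)) by ring.
  unfold Rminus at 1. eapply Rle_trans; [apply Rabs_triang|]. rewrite Rabs_Ropp. lra.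
Qed.

Lemma clustering_expansions_component (M : R) (x : nat -> nat -> R) (p : nat -> R)
    (idx : nat -> nat) (tj : nat -> R) (bj : nat -> nat -> R) (G : nat -> R -> R) (F : R -> R) :
  1 <= M ->
  (forall P e, 0 < e -> infinitely_often (fun j => forall i, (i <= P)%nat -> Rabs (x j i - p i) < e)) ->
  (forall j, x j 0%nat = tj j) -> (forall n, (idx n <= 2 * n + 2)%nat) ->
  (forall j n, x j (idx n) = bj j n) -> (forall j, coef_bounded M (bj j)) ->
  (forall j t, Rabs (G j t - F t) <= / INR (S j)) ->
  (forall j t, Rabs (t - tj j) < / M -> G j t = PSeries (bj j) (t - tj j)) ->
  coef_bounded M (fun n => p (idx n)) /\
  forall t, Rabs (t - p 0%nat) < / (4 * M) -> F t = PSeries (fun n => p (idx n)) (t - p 0%nat).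
Proof.
  intros HM Hp Hx0 Hidx Hx Hb HG He.
  assert (Hpb : coef_bounded M (fun n => p (idx n))).
  { intros n. apply (cluster_point_bound x p _ (idx n)).
    - intros j. rewrite Hx. apply Hb.
    - intros e He' J. destruct (Hp (idx n) e He' J) as [j [Hj Hj2]]. exists j. split; auto. }
  split; auto. intros t Ht.
  apply (limit_of_close_expansions M t _ _ bj tj _ (fun j => G j t)); auto.
  - intros j Hj. apply He. eapply Rle_lt_trans; [exact Hj|]. apply Rinv_lt_contravar; nra.
  - intros P eta Heta J. destruct (Hp (2 * P + 2)%nat eta Heta J) as [j [Hj Hj2]].
    exists j. split; auto. split; [rewrite <- Hx0; apply (Hj2 0%nat); lia|].
    intros n Hn. rewrite <- Hx. apply Hj2. pose proof (Hidx n). lia.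
Qed.

(** The functions with an [m]-bounded expansion form a set closed under uniform limits. *)
Lemma bounded_expansions_limit Phi (f : curve Phi -> Cx) (m : nat) (tj : nat -> R)
    (aj : nat -> nat -> Cx) (G : nat -> R -> Cx) :
  (forall j, bounded_expansion (G j) m (tj j) (aj j)) ->
  (forall j t, Rabs (fst (G j t) - fst (pullback Phi f t)) <= / INR (S j) /\
               Rabs (snd (G j t) - snd (pullback Phi f t)) <= / INR (S j)) ->
  exists t0, real_analytic_at Phi f t0.
Proof.
  intros HG HC. set (M := INR m).
  assert (HM : 1 <= M) by apply (HG 0%nat).
  set (x j := expansion_code (tj j) (aj j)).
  destruct (diagonal_cluster_point x (fun i => M ^ S i)) as [p Hp].
  { intros j i. apply (expansion_code_bound _ _ _ _ _ (HG j)). }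
  destruct (clustering_expansions_component M x p (fun n => S (2 * n)) tj (fun j n => fst (aj j n))
              (fun j t => fst (G j t)) (fun t => fst (pullback Phi f t))) as [Hb1 He1]; auto.
  { intros n. lia. }
  { intros j n. apply expansion_code_fst. }
  { intros j. apply (HG j). }
  { intros j t. apply (HC j t). }
  { intros j t Ht. destruct (HG j) as [_ [_ [_ [_ He]]]]. now rewrite (He t Ht). }
  destruct (clustering_expansions_component M x p (fun n => S (S (2 * n))) tj (fun j n => snd (aj j n))
              (fun j t => snd (G j t)) (fun t => snd (pullback Phi f t))) as [Hb2 He2]; auto.
  { intros n. lia. }
  { intros j n. apply expansion_code_snd. }
  { intros j. apply (HG j). }
  { intros j t. apply (HC j t). }
  { intros j t Ht. destruct (HG j) as [_ [_ [_ [_ He]]]]. now rewrite (He t Ht). }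
  exists (p 0%nat).
  apply (bounded_expansion_real_analytic_at Phi f _ (fun n => (p (S (2 * n)), p (S (S (2 * n)))))
           M (/ (4 * M))); auto.
  - apply Rinv_0_lt_compat; lra.
  - apply Rinv_le_contravar; lra.
  - intros t Ht. unfold Cpseries; simpl. rewrite <- He1, <- He2 by exact Ht.
    apply surjective_pairing.
Qed.

(** * The G_delta property *)

Lemma le_order_S j k : le_order (S j) k -> le_order j k.
Proof. destruct k; simpl; auto; lia. Qed.

Lemma le_order_0 k : le_order 0 k.
Proof. destruct k; simpl; auto; lia. Qed.

Lemma derivs_upto_unique k u D1 D2 : derivs_upto k u D1 -> derivs_upto k u D2 ->
  forall j, le_order j k -> forall t, D1 j t = D2 j t.
Proof.
  intros [A0 [_ A2]] [B0 [_ B2]] j. induction j as [|j IH]; intros Hj t.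
  - now rewrite A0, B0.
  - assert (E : forall s, D1 j s = D2 j s) by (apply IH, le_order_S, Hj).
    destruct (A2 j Hj t) as [F1 S1], (B2 j Hj t) as [F2 S2].
    rewrite (functional_extensionality _ _ (fun s => f_equal fst (E s))) in F1.
    rewrite (functional_extensionality _ _ (fun s => f_equal snd (E s))) in S1.
    rewrite (surjective_pairing (D1 (S j) t)), (surjective_pairing (D2 (S j) t)).
    f_equal; eapply uniqueness_limite; eauto.
Qed.

Lemma Ck_close_trans Phi k N e1 e2 f g h :
  Ck_close Phi k N e1 f g -> Ck_close Phi k N e2 g h -> Ck_close Phi k N (e1 + e2) f h.
Proof.
  intros [Df [Dg [HDf [HDg B1]]]] [Dg' [Dh [HDg' [HDh B2]]]].
  exists Df, Dh. split; [|split]; auto. intros j Hj Hk t.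
  eapply Rle_trans; [apply (Cnorm_sub_triangle _ _ (Dg j t))|].
  pose proof (B1 j Hj Hk t). pose proof (B2 j Hj Hk t).
  rewrite <- (derivs_upto_unique k _ Dg Dg' HDg HDg' j Hk t) in *. lra.
Qed.

Lemma Ck_close_refl Phi k N eps f : in_Ck Phi k f -> 0 <= eps -> Ck_close Phi k N eps f f.
Proof.
  intros [D HD] He. exists D, D. split; [|split]; auto. intros j _ _ t. now rewrite Cnorm_sub_diag.
Qed.

Definition has_bounded_expansion (Phi : Cx -> Cx) (m : nat) (g : curve Phi -> Cx) : Prop :=
  exists t0 a, bounded_expansion (pullback Phi g) m t0 a.

(** The interior of the complement of [has_bounded_expansion Phi m]. *)
Definition avoids_expansions (Phi : Cx -> Cx) (k : ck_order) (m : nat) (f : curve Phi -> Cx) : Prop :=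
  in_Ck Phi k f /\ exists N eps, 0 < eps /\
    forall g, in_Ck Phi k g -> Ck_close Phi k N eps f g -> ~ has_bounded_expansion Phi m g.

Lemma avoids_expansions_open (Phi : Cx -> Cx) (k : ck_order) m :
  Ck_open Phi k (avoids_expansions Phi k m).
Proof.
  intros f [Hf [N [eps [He H]]]]. split; auto. exists N, (eps / 2). split; [lra|].
  intros g Hg Hfg. split; auto. exists N, (eps / 2). split; [lra|].
  intros g' Hg' Hgg'. apply H; auto.
  replace eps with (eps / 2 + eps / 2) by field. eapply Ck_close_trans; eauto.
Qed.

Lemma nowhere_real_analytic_avoids_expansions (Phi : Cx -> Cx) (k : ck_order) f m :
  in_Ck Phi k f -> nowhere_real_analytic Phi f -> avoids_expansions Phi k m f.
Proof.
  intros Hf Hna. split; auto. apply NNPP. intros Hnot.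
  (* otherwise functions with m-bounded expansions accumulate at f in C^0 *)
  assert (Hseq : forall j, exists g, Ck_close Phi k 0 (/ INR (S j)) f g /\ has_bounded_expansion Phi m g).
  { intros j. apply NNPP. intros Hn. apply Hnot. exists 0%nat, (/ INR (S j)). split.
    - apply Rinv_0_lt_compat, lt_0_INR; lia.
    - intros g _ Hc Hb. apply Hn. exists g; auto. }
  apply choice in Hseq. destruct Hseq as [G HG].
  assert (Hta : forall j, exists ta : R * (nat -> Cx),
                 bounded_expansion (pullback Phi (G j)) m (fst ta) (snd ta)).
  { intros j. destruct (HG j) as [_ [t0 [a Ha]]]. now exists (t0, a). }
  apply choice in Hta. destruct Hta as [TA HTA].
  destruct (bounded_expansions_limit Phi f m (fun j => fst (TA j)) (fun j => snd (TA j))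
              (fun j => pullback Phi (G j)) HTA) as [t0 Ht0]; [|exact (Hna t0 Ht0)].
  intros j t. destruct (HG j) as [[Df [Dg [[Df0 _] [[Dg0 _] Hb]]]] _].
  specialize (Hb 0%nat (Nat.le_refl _) (le_order_0 k) t). rewrite Df0, Dg0 in Hb.
  split; (eapply Rle_trans; [|exact Hb]); [apply (Cnorm_fst (Csub _ _)) | apply (Cnorm_snd (Csub _ _))].
Qed.

Lemma avoids_expansions_nowhere_real_analytic (Phi : Cx -> Cx) (k : ck_order) f :
  (forall m, avoids_expansions Phi k m f) -> nowhere_real_analytic Phi f.
Proof.
  intros H t0 Han. destruct (real_analytic_at_bounded_expansion Phi f t0 Han) as [m [a Ha]].
  destruct (H m) as [Hf [N [eps [He Hu]]]].
  apply (Hu f Hf (Ck_close_refl Phi k N eps f Hf ltac:(lra))). now exists t0, a.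
Qed.

Lemma Ck_Gdelta_nowhere_real_analytic (Phi : Cx -> Cx) (k : ck_order) :
  Ck_Gdelta Phi k (fun f => in_Ck Phi k f /\ nowhere_real_analytic Phi f).
Proof.
  exists (avoids_expansions Phi k). split; [apply avoids_expansions_open|].
  intros f. split.
  - intros [Hf Hna] m. now apply nowhere_real_analytic_avoids_expansions.
  - intros H. split; [apply (H 0%nat) | now apply (avoids_expansions_nowhere_real_analytic Phi k)].
Qed.

Theorem theorem5p11 (Phi : Cx -> Cx) (rho Rr : R)
  (Hrho : 0 < rho) (Hrho1 : rho < 1) (HR : 1 < Rr)
  (Hhol : holomorphic_on_annulus Phi rho Rr)
  (Hinj : injective_on_annulus Phi rho Rr)
  (k : ck_order) :
  let S := fun f => in_Ck Phi k f /\ nowhere_real_analytic Phi f in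
  Ck_dense Phi k S /\ Ck_Gdelta Phi k S.
Proof.
  (* only the injectivity of [Phi] on the unit circle is used: it makes [h] a function on the curve *)
  intros S. split.
  - exact (Ck_dense_nowhere_real_analytic Phi rho Rr k Hrho1 HR Hinj).
  - apply Ck_Gdelta_nowhere_real_analytic.
Qed.
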